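(* For each $a\in(0,1)$ there is a unique $b\in(0,1)$ such that $[(a,0)]=[(0,-b^2)]$. Moreover, the map $(0,1)\to(0,1)$ sending $a$ to this $b$ is a diffeomorphism of $(0,1)$.
   Context: $\mathbb{D}$ is the open unit disc and $\mathrm{Aut}(\mathbb{D})$ its holomorphic automorphism group. $\mathbb{G}=\{(z_1+z_2,z_1z_2):z_1,z_2\in\mathbb{D}\}$. For $\varphi\in\mathrm{Aut}(\mathbb{D})$, $H_\varphi(z_1+z_2,z_1z_2)=(\varphi(z_1)+\varphi(z_2),\varphi(z_1)\varphi(z_2))$. For $(s,p)\in\mathbb{G}$, $[(s,p)]=\{H_\varphi(s,p):\varphi\in\mathrm{Aut}(\mathbb{D})\}$ is its orbit. *)

From Stdlib Require Import Reals.
From Coquelicot Require Import Coquelicot.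
Open Scope R_scope.

Definition inD (z : C) : Prop := Cmod z < 1.

Definition holo_on_D (f : C -> C) : Prop :=
  forall z : C, inD z -> @ex_derive C_AbsRing C_NormedModule f z.

(* Holomorphic automorphisms of D: holomorphic bijections D -> D with
   holomorphic inverse (values outside D are irrelevant). *)
Definition AutD (phi : C -> C) : Prop :=
  (forall z, inD z -> inD (phi z)) /\ holo_on_D phi /\
  exists psi : C -> C,
    (forall z, inD z -> inD (psi z)) /\ holo_on_D psi /\
    (forall z, inD z -> psi (phi z) = z) /\
    (forall z, inD z -> phi (psi z) = z).

Definition inG (x : C * C) : Prop :=
  exists z1 z2, inD z1 /\ inD z2 /\ x = (z1 + z2, z1 * z2)%C.

(* y = H_phi(x): writing x = (z1+z2, z1 z2) with z1,z2 in D,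
   y = (phi z1 + phi z2, phi z1 phi z2).  (Independent of the choice of
   z1, z2 since the formula is symmetric.) *)
Definition H_rel (phi : C -> C) (x y : C * C) : Prop :=
  exists z1 z2, inD z1 /\ inD z2 /\ x = (z1 + z2, z1 * z2)%C /\
    y = (phi z1 + phi z2, phi z1 * phi z2)%C.

Definition orbit (x : C * C) (y : C * C) : Prop :=
  exists phi, AutD phi /\ H_rel phi x y.

Definition same_orbit (x x' : C * C) : Prop :=
  forall y, orbit x y <-> orbit x' y.

Definition in01 (t : R) : Prop := 0 < t < 1.

Definition smooth_on01 (f : R -> R) : Prop :=
  forall (n : nat) (x : R), in01 x -> ex_derive_n f n x.

Definition diffeo01 (f : R -> R) : Prop :=
  (forall x, in01 x -> in01 (f x)) /\ smooth_on01 f /\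
  exists g : R -> R,
    (forall x, in01 x -> in01 (g x)) /\ smooth_on01 g /\
    (forall x, in01 x -> g (f x) = x) /\
    (forall x, in01 x -> f (g x) = x).

(* Write points of G as unordered pairs {z1, z2}: [(a,0)] is {0, a} and [(0,-b^2)] is {b, -b}.
   The Moebius involution m_b(z) = (b - z)/(1 - b z) sends {b, -b} to {0, 2b/(1+b^2)}, so the two
   orbits agree when a = 2b/(1+b^2), i.e. b = a/(1 + sqrt(1 - a^2)), a smooth map with smooth inverse.
   For uniqueness, automorphisms of D do not increase the pseudo-hyperbolic distance
   |z - w|/|1 - conj w z| (Schwarz-Pick), and the distance from b to -b is 2b/(1+b^2), which is
   injective on (0,1).  Schwarz-Pick is proved from first principles: Goursat's lemma on polar
   rectangles makes the circle integral of k(z)/z^2 independent of the radius, whence |k'(0)| <= 1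
   when k(0) = 0; conjugating by Moebius maps gives |f'(z)| (1 - |z|^2) <= 1 - |f(z)|^2, and
   integrating this along a radius yields |f(z)| <= |z| when f(0) = 0. *)

From Stdlib Require Import Reals Lra.
From Coquelicot Require Import Coquelicot.
Open Scope R_scope.

(** * Complex derivatives and paths *)

Definition is_Cderive (f : C -> C) (z l : C) : Prop :=
  forall eps, 0 < eps -> exists del, 0 < del /\
    forall w, Cmod (w - z) < del -> Cmod (f w - f z - (w - z) * l) <= eps * Cmod (w - z).

Definition Ccontinuous (f : C -> C) (z : C) : Prop :=
  forall eps, 0 < eps -> exists del, 0 < del /\
    forall w, Cmod (w - z) < del -> Cmod (f w - f z) < eps.

Definition is_pderive (g : R -> C) (t : R) (l : C) : Prop :=
  forall eps, 0 < eps -> exists del, 0 < del /\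
    forall s, Rabs (s - t) < del -> Cmod (g s - g t - RtoC (s - t) * l) <= eps * Rabs (s - t).

Definition pcontinuous (g : R -> C) (t : R) : Prop :=
  forall eps, 0 < eps -> exists del, 0 < del /\
    forall s, Rabs (s - t) < del -> Cmod (g s - g t) < eps.

Lemma is_Cderive_is_derive f z l :
  is_Cderive f z l <-> @is_derive C_AbsRing C_NormedModule f z l.
Proof.
  split.
  - intros H. split; [apply is_linear_scal_l |].
    intros x Hx.
    apply (@is_filter_lim_locally_unique C_AbsRing (AbsRing_NormedModule C_AbsRing)) in Hx.
    subst x. intros [eps Heps]. destruct (H eps Heps) as [d [Hd H']].
    exists (mkposreal d Hd). exact H'.
  - intros [_ H] eps Heps.
    destruct (H z (fun P HP => HP) (mkposreal eps Heps)) as [d Hd].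
    exists d. split; [apply cond_pos | exact Hd].
Qed.

(* Coquelicot's product and chain rules are stated on [AbsRing_NormedModule C_AbsRing], which is
   not convertible to the [C_NormedModule] of [holo_on_D]. *)
Lemma is_Cderive_is_derive_K f z l :
  is_Cderive f z l <-> @is_derive C_AbsRing (AbsRing_NormedModule C_AbsRing) f z l.
Proof.
  split.
  - intros H. split; [apply is_linear_scal_l |].
    intros x Hx.
    apply (@is_filter_lim_locally_unique C_AbsRing (AbsRing_NormedModule C_AbsRing)) in Hx.
    subst x. intros [eps Heps]. destruct (H eps Heps) as [d [Hd H']].
    exists (mkposreal d Hd). exact H'.
  - intros [_ H] eps Heps.
    destruct (H z (fun P HP => HP) (mkposreal eps Heps)) as [d Hd].
    exists d. split; [apply cond_pos | exact Hd].
Qed.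

Lemma holo_on_D_is_Cderive f :
  holo_on_D f <-> forall z, inD z -> exists l, is_Cderive f z l.
Proof.
  split; intros H z Hz; destruct (H z Hz) as [l Hl]; exists l; apply is_Cderive_is_derive; exact Hl.
Qed.

Lemma is_Cderive_ext f z l l' : is_Cderive f z l -> l = l' -> is_Cderive f z l'.
Proof. now intros H <-. Qed.

Lemma is_Cderive_id z : is_Cderive (fun w => w) z 1%C.
Proof.
  intros e He. exists 1. split; [lra |]. intros w _.
  replace (w - z - (w - z) * 1)%C with (RtoC 0) by ring.
  rewrite Cmod_0. pose proof (Cmod_ge_0 (w - z)). nra.
Qed.

Lemma is_Cderive_const c z : is_Cderive (fun _ => c) z 0%C.
Proof.
  intros e He. exists 1. split; [lra |]. intros w _.
  replace (c - c - (w - z) * 0)%C with (RtoC 0) by ring.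
  rewrite Cmod_0. pose proof (Cmod_ge_0 (w - z)). nra.
Qed.

Lemma is_Cderive_plus f g z lf lg : is_Cderive f z lf -> is_Cderive g z lg ->
  is_Cderive (fun w => f w + g w)%C z (lf + lg)%C.
Proof.
  rewrite !is_Cderive_is_derive. apply (@is_derive_plus C_AbsRing C_NormedModule).
Qed.

Lemma is_Cderive_opp f z l : is_Cderive f z l -> is_Cderive (fun w => - f w)%C z (- l)%C.
Proof.
  rewrite !is_Cderive_is_derive. apply (@is_derive_opp C_AbsRing C_NormedModule).
Qed.

Lemma is_Cderive_mult f g z lf lg : is_Cderive f z lf -> is_Cderive g z lg ->
  is_Cderive (fun w => f w * g w)%C z (lf * g z + f z * lg)%C.
Proof.
  rewrite !is_Cderive_is_derive_K. intros Hf Hg.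
  exact (@is_derive_mult C_AbsRing f g z lf lg Hf Hg Cmult_comm).
Qed.

Lemma is_Cderive_comp f g z lf lg : is_Cderive f (g z) lf -> is_Cderive g z lg ->
  is_Cderive (fun w => f (g w)) z (lg * lf)%C.
Proof.
  rewrite is_Cderive_is_derive, is_Cderive_is_derive_K, is_Cderive_is_derive. intros Hf Hg.
  exact (@is_derive_comp C_AbsRing C_NormedModule f g z lf lg Hf Hg).
Qed.

Lemma is_Cderive_inv (w : C) : w <> 0%C -> is_Cderive Cinv w (- / (w * w))%C.
Proof.
  intros Hw e He.
  assert (Hm : 0 < Cmod w) by exact (proj1 (Cmod_gt_0 w) Hw).
  exists (Rmin (Cmod w / 2) (e * Cmod w ^ 3 / 2)). split.
  { apply Rmin_pos; [lra |]. apply Rdiv_lt_0_compat; [| lra].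
    apply Rmult_lt_0_compat; [lra | apply pow_lt; lra]. }
  intros v Hv.
  assert (Hv1 : Cmod (v - w) < Cmod w / 2) by (eapply Rlt_le_trans; [exact Hv | apply Rmin_l]).
  assert (Hv2 : Cmod (v - w) < e * Cmod w ^ 3 / 2) by (eapply Rlt_le_trans; [exact Hv | apply Rmin_r]).
  assert (Hvm : Cmod w / 2 <= Cmod v).
  { pose proof (Cmod_triangle v (w - v)) as T.
    replace (v + (w - v))%C with w in T by ring.
    replace (w - v)%C with (- (v - w))%C in T by ring. rewrite Cmod_opp in T. lra. }
  assert (Hv0 : v <> 0%C) by (intros ->; rewrite Cmod_0 in Hvm; lra).
  replace (/ v - / w - (v - w) * - / (w * w))%C with ((v - w) * (v - w) * / (v * (w * w)))%C
    by (field; auto).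
  rewrite !Cmod_mult, Cmod_inv, !Cmod_mult by (repeat apply Cmult_neq_0; auto).
  set (d := Cmod (v - w)) in *. pose proof (Cmod_ge_0 (v - w)) as Hd. fold d in Hd.
  assert (Hden : Cmod w ^ 3 / 2 <= Cmod v * (Cmod w * Cmod w)).
  { replace (Cmod w ^ 3 / 2) with (Cmod w / 2 * (Cmod w * Cmod w)) by (simpl; field).
    apply Rmult_le_compat_r; nra. }
  assert (Hpos : 0 < Cmod v * (Cmod w * Cmod w)) by (apply Rmult_lt_0_compat; nra).
  apply Rmult_le_reg_r with (Cmod v * (Cmod w * Cmod w)); [exact Hpos |].
  rewrite Rmult_assoc, Rinv_l, Rmult_1_r by lra.
  assert (d * d <= d * (e * (Cmod w ^ 3 / 2))) by (apply Rmult_le_compat_l; lra).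
  assert (d * e * (Cmod w ^ 3 / 2) <= d * e * (Cmod v * (Cmod w * Cmod w)))
    by (apply Rmult_le_compat_l; [apply Rmult_le_pos |]; lra).
  nra.
Qed.

Lemma is_Cderive_continuous f z l : is_Cderive f z l -> Ccontinuous f z.
Proof.
  intros H e He. destruct (H 1 Rlt_0_1) as [d [Hd H1]].
  pose proof (Cmod_ge_0 l).
  exists (Rmin d (e / (Cmod l + 2))). split; [apply Rmin_pos; [lra | apply Rdiv_lt_0_compat; lra] |].
  intros w Hw.
  assert (Hw1 : Cmod (w - z) < d) by (eapply Rlt_le_trans; [exact Hw | apply Rmin_l]).
  assert (Hw2 : Cmod (w - z) < e / (Cmod l + 2)) by (eapply Rlt_le_trans; [exact Hw | apply Rmin_r]).
  specialize (H1 w Hw1).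
  replace (f w - f z)%C with ((f w - f z - (w - z) * l) + (w - z) * l)%C by ring.
  eapply Rle_lt_trans; [apply Cmod_triangle |]. rewrite Cmod_mult.
  pose proof (Cmod_ge_0 (w - z)).
  assert (Cmod (w - z) * (Cmod l + 2) < e).
  { apply Rmult_lt_reg_r with (/ (Cmod l + 2)); [apply Rinv_0_lt_compat; lra |].
    rewrite Rmult_assoc, Rinv_r by lra. lra. }
  nra.
Qed.

Lemma pcontinuous_const c t : pcontinuous (fun _ => c) t.
Proof.
  intros e He. exists 1. split; [lra |]. intros s _.
  replace (c - c)%C with (RtoC 0) by ring. rewrite Cmod_0. lra.
Qed.

Lemma pcontinuous_mult g h t : pcontinuous g t -> pcontinuous h t ->
  pcontinuous (fun s => g s * h s)%C t.
Proof.
  intros Hg Hh e He.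
  set (A := Cmod (g t)). set (B := Cmod (h t)).
  assert (HA : 0 <= A) by apply Cmod_ge_0. assert (HB : 0 <= B) by apply Cmod_ge_0.
  destruct (Hg (e / (2 * (B + 1)))) as [d1 [Hd1 H1]]; [apply Rdiv_lt_0_compat; lra |].
  destruct (Hh (Rmin 1 (e / (2 * (A + 1))))) as [d2 [Hd2 H2]].
  { apply Rmin_pos; [lra | apply Rdiv_lt_0_compat; lra]. }
  exists (Rmin d1 d2). split; [apply Rmin_pos; lra |]. intros s Hs.
  specialize (H1 s (Rlt_le_trans _ _ _ Hs (Rmin_l _ _))).
  specialize (H2 s (Rlt_le_trans _ _ _ Hs (Rmin_r _ _))).
  pose proof (Rmin_l 1 (e / (2 * (A + 1)))). pose proof (Rmin_r 1 (e / (2 * (A + 1)))).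
  replace (g s * h s - g t * h t)%C with ((g s - g t) * h s + g t * (h s - h t))%C by ring.
  eapply Rle_lt_trans; [apply Cmod_triangle |]. rewrite !Cmod_mult. fold A.
  assert (Hhs : Cmod (h s) <= B + 1).
  { replace (h s) with ((h s - h t) + h t)%C by ring.
    eapply Rle_trans; [apply Cmod_triangle |]. fold B. lra. }
  pose proof (Cmod_ge_0 (g s - g t)). pose proof (Cmod_ge_0 (h s - h t)).
  assert (X1 : Cmod (g s - g t) * Cmod (h s) <= e / (2 * (B + 1)) * (B + 1))
    by (apply Rmult_le_compat; try lra; apply Cmod_ge_0).
  assert (X2 : A * Cmod (h s - h t) <= A * (e / (2 * (A + 1))))
    by (apply Rmult_le_compat_l; lra).
  replace (e / (2 * (B + 1)) * (B + 1)) with (e / 2) in X1 by (field; lra).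
  assert (X3 : A * (e / (2 * (A + 1))) < e / 2).
  { replace (A * (e / (2 * (A + 1)))) with (e / 2 * (A / (A + 1))) by (field; lra).
    assert (A / (A + 1) < 1).
    { apply Rmult_lt_reg_r with (A + 1); [lra |].
      unfold Rdiv. rewrite Rmult_assoc, Rinv_l by lra. lra. }
    nra. }
  lra.
Qed.

Lemma pcontinuous_comp f g t : Ccontinuous f (g t) -> pcontinuous g t ->
  pcontinuous (fun s => f (g s)) t.
Proof.
  intros Hf Hg e He. destruct (Hf e He) as [d1 [Hd1 H1]]. destruct (Hg d1 Hd1) as [d2 [Hd2 H2]].
  exists d2. split; [exact Hd2 |]. intros s Hs. apply H1, H2, Hs.
Qed.

Lemma is_pderive_continuous g t l : is_pderive g t l -> pcontinuous g t.
Proof.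
  intros H e He. destruct (H 1 Rlt_0_1) as [d [Hd H1]].
  pose proof (Cmod_ge_0 l).
  exists (Rmin d (e / (Cmod l + 2))). split; [apply Rmin_pos; [lra | apply Rdiv_lt_0_compat; lra] |].
  intros s Hs.
  assert (Hs1 : Rabs (s - t) < d) by (eapply Rlt_le_trans; [exact Hs | apply Rmin_l]).
  assert (Hs2 : Rabs (s - t) < e / (Cmod l + 2)) by (eapply Rlt_le_trans; [exact Hs | apply Rmin_r]).
  specialize (H1 s Hs1).
  replace (g s - g t)%C with ((g s - g t - RtoC (s - t) * l) + RtoC (s - t) * l)%C by ring.
  eapply Rle_lt_trans; [apply Cmod_triangle |]. rewrite Cmod_mult, Cmod_R.
  pose proof (Rabs_pos (s - t)).
  assert (Rabs (s - t) * (Cmod l + 2) < e).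
  { apply Rmult_lt_reg_r with (/ (Cmod l + 2)); [apply Rinv_0_lt_compat; lra |].
    rewrite Rmult_assoc, Rinv_r by lra. lra. }
  nra.
Qed.

Lemma is_pderive_ext g t l l' : is_pderive g t l -> l = l' -> is_pderive g t l'.
Proof. now intros H <-. Qed.

Lemma is_pderive_comp f g t lf lg : is_Cderive f (g t) lf -> is_pderive g t lg ->
  is_pderive (fun s => f (g s)) t (lg * lf)%C.
Proof.
  intros Hf Hg e He.
  set (K := Cmod lg + Cmod lf + 1).
  pose proof (Cmod_ge_0 lg). pose proof (Cmod_ge_0 lf).
  assert (HK : 0 < K) by (unfold K; lra).
  set (eta := Rmin 1 (e / K)).
  assert (Heta : 0 < eta) by (apply Rmin_pos; [lra | apply Rdiv_lt_0_compat; lra]).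
  assert (Heta1 : eta <= 1) by apply Rmin_l.
  assert (HetaK : eta * K <= e).
  { apply Rle_trans with (e / K * K); [apply Rmult_le_compat_r; [lra | apply Rmin_r] |].
    right. field. lra. }
  destruct (Hf eta Heta) as [d1 [Hd1 H1]].
  destruct (is_pderive_continuous g t lg Hg d1 Hd1) as [d2 [Hd2 H2]].
  destruct (Hg eta Heta) as [d3 [Hd3 H3]].
  exists (Rmin d2 d3). split; [apply Rmin_pos; lra |]. intros s Hs.
  specialize (H2 s (Rlt_le_trans _ _ _ Hs (Rmin_l _ _))).
  specialize (H3 s (Rlt_le_trans _ _ _ Hs (Rmin_r _ _))).
  specialize (H1 (g s) H2).
  pose proof (Rabs_pos (s - t)).
  assert (Hgs : Cmod (g s - g t) <= (Cmod lg + eta) * Rabs (s - t)).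
  { replace (g s - g t)%C with ((g s - g t - RtoC (s - t) * lg) + RtoC (s - t) * lg)%C by ring.
    eapply Rle_trans; [apply Cmod_triangle |]. rewrite Cmod_mult, Cmod_R. lra. }
  replace (f (g s) - f (g t) - RtoC (s - t) * (lg * lf))%C with
    ((f (g s) - f (g t) - (g s - g t) * lf) + (g s - g t - RtoC (s - t) * lg) * lf)%C by ring.
  eapply Rle_trans; [apply Cmod_triangle |]. rewrite Cmod_mult.
  assert (Cmod (g s - g t - RtoC (s - t) * lg) * Cmod lf <= eta * Rabs (s - t) * Cmod lf)
    by (apply Rmult_le_compat_r; lra).
  assert (eta * Cmod (g s - g t) <= eta * ((Cmod lg + eta) * Rabs (s - t)))
    by (apply Rmult_le_compat_l; lra).
  assert (0 <= eta * Rabs (s - t) * (1 - eta)) by (apply Rmult_le_pos; [apply Rmult_le_pos |]; lra).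
  assert (eta * K * Rabs (s - t) <= e * Rabs (s - t)) by (apply Rmult_le_compat_r; lra).
  unfold K in *. nra.
Qed.

Lemma is_derive_real_linear_comp (h : C -> R) g t l :
  (forall z, Rabs (h z) <= Cmod z) -> (forall x y, h (x - y)%C = h x - h y) ->
  (forall (r : R) z, h (RtoC r * z)%C = r * h z) ->
  is_pderive g t l -> is_derive (fun s => h (g s)) t (h l).
Proof.
  intros Hh Hlin Hsc H. apply is_derive_Reals. intros e He.
  destruct (H (e / 2)) as [d [Hd H']]; [lra |].
  exists (mkposreal d Hd). intros k Hk0 Hk. simpl in Hk.
  specialize (H' (t + k)). replace (t + k - t) with k in H' by ring. specialize (H' Hk).
  replace ((h (g (t + k)) - h (g t)) / k - h l)
    with (h (Cminus (Cminus (g (t + k)) (g t)) (Cmult k l)) / k)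
    by (rewrite !Hlin, Hsc; field; exact Hk0).
  unfold Rdiv. rewrite Rabs_mult, Rabs_inv.
  assert (0 < Rabs k) by (apply Rabs_pos_lt; exact Hk0).
  apply Rle_lt_trans with (e / 2 * Rabs k * / Rabs k).
  - apply Rmult_le_compat_r; [left; apply Rinv_0_lt_compat; lra |].
    eapply Rle_trans; [apply Hh | exact H'].
  - replace (e / 2 * Rabs k * / Rabs k) with (e / 2) by (field; lra). lra.
Qed.

Lemma is_pderive_Re_Im g t l : is_pderive g t l ->
  is_derive (fun s => Re (g s)) t (Re l) /\ is_derive (fun s => Im (g s)) t (Im l).
Proof.
  intros H. split; apply is_derive_real_linear_comp; try exact H.
  - apply re_le_Cmod.
  - intros [] []. unfold Re. simpl. ring.
  - intros r []. unfold Re. simpl. ring.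
  - intros [x y]. eapply Rle_trans; [apply Rmax_r | apply (Rmax_Cmod (x, y))].
  - intros [] []. unfold Im. simpl. ring.
  - intros r []. unfold Im. simpl. ring.
Qed.

Lemma is_pderive_of_Re_Im g t l :
  is_derive (fun s => Re (g s)) t (Re l) -> is_derive (fun s => Im (g s)) t (Im l) ->
  is_pderive g t l.
Proof.
  intros H1 H2 e He.
  apply is_derive_Reals in H1. apply is_derive_Reals in H2.
  destruct (H1 (e / 2)) as [d1 Hd1]; [lra |]. destruct (H2 (e / 2)) as [d2 Hd2]; [lra |].
  exists (Rmin d1 d2). split; [apply Rmin_pos; apply cond_pos |]. intros s Hs.
  destruct (Req_dec s t) as [-> | Hst].
  { rewrite Rminus_diag, Rabs_R0, Rmult_0_r.
    replace (g t - g t - RtoC 0 * l)%C with (RtoC 0) by ring. rewrite Cmod_0. lra. }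
  assert (Hh : s - t <> 0) by lra.
  specialize (Hd1 (s - t) Hh (Rlt_le_trans _ _ _ Hs (Rmin_l _ _))).
  specialize (Hd2 (s - t) Hh (Rlt_le_trans _ _ _ Hs (Rmin_r _ _))).
  replace (t + (s - t)) with s in Hd1, Hd2 by ring.
  assert (Hquot : forall a b c, Rabs ((a - b) / (s - t) - c) < e / 2 ->
            Rabs (a - b - (s - t) * c) <= e / 2 * Rabs (s - t)).
  { intros a b c Habc.
    replace (a - b - (s - t) * c) with (((a - b) / (s - t) - c) * (s - t)) by (field; exact Hh).
    rewrite Rabs_mult. apply Rmult_le_compat_r; [apply Rabs_pos | lra]. }
  apply Hquot in Hd1. apply Hquot in Hd2.
  unfold Re, Im in *. destruct (g s) as [a1 a2], (g t) as [b1 b2], l as [l1 l2]. simpl in *.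
  replace ((a1, a2) - (b1, b2) - RtoC (s - t) * (l1, l2))%C
    with (RtoC (a1 - b1 - (s - t) * l1) + RtoC (a2 - b2 - (s - t) * l2) * Ci)%C
    by (unfold Cminus, Cplus, Copp, Cmult, RtoC, Ci; simpl; f_equal; ring).
  eapply Rle_trans; [apply Cmod_triangle |].
  rewrite Cmod_mult, Cmod_Ci, !Cmod_R. lra.
Qed.

(** * Path integrals *)

Lemma Cmod_norm_R (z : C) : @norm R_AbsRing C_R_NormedModule z = Cmod z.
Proof.
  unfold norm; simpl. unfold prod_norm, Cmod. simpl.
  change (@norm R_AbsRing R_NormedModule (fst z)) with (Rabs (fst z)).
  change (@norm R_AbsRing R_NormedModule (snd z)) with (Rabs (snd z)).
  rewrite !Rmult_1_r, <- !Rsqr_def, <- !Rsqr_abs. reflexivity.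
Qed.

Lemma is_pderive_is_derive g t l :
  is_pderive g t l -> @is_derive R_AbsRing C_R_NormedModule g t l.
Proof.
  intros H. split; [apply is_linear_scal_l |].
  intros x Hx. apply (@is_filter_lim_locally_unique R_AbsRing (AbsRing_NormedModule R_AbsRing)) in Hx.
  subst x. intros [eps Heps]. destruct (H eps Heps) as [d [Hd H']].
  exists (mkposreal d Hd). intros w Hw. simpl.
  rewrite Cmod_norm_R, scal_R_Cmult. apply H', Hw.
Qed.

Lemma pcontinuous_continuous g t :
  pcontinuous g t -> @continuous R_UniformSpace C_R_CompleteNormedModule g t.
Proof.
  intros H. apply (@filterlim_locally_ball_norm R_AbsRing); [apply locally_filter |].
  intros [eps Heps]. destruct (H eps Heps) as [d [Hd H']].
  exists (mkposreal d Hd). intros s Hs. unfold ball_norm. rewrite Cmod_norm_R. apply H', Hs.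
Qed.

Definition Cint (g : R -> C) (a b : R) : C := @RInt C_R_CompleteNormedModule g a b.
Definition ex_Cint (g : R -> C) (a b : R) : Prop := @ex_RInt C_R_CompleteNormedModule g a b.

Lemma pcontinuous_ex_Cint g a b :
  (forall t, Rmin a b <= t <= Rmax a b -> pcontinuous g t) -> ex_Cint g a b.
Proof.
  intros H. apply ex_RInt_continuous. intros z Hz. apply pcontinuous_continuous, H, Hz.
Qed.

Lemma Cint_Chasles g a b c : ex_Cint g a b -> ex_Cint g b c ->
  (Cint g a b + Cint g b c)%C = Cint g a c.
Proof. apply (RInt_Chasles (V := C_R_CompleteNormedModule)). Qed.

Lemma Cint_minus g h a b : ex_Cint g a b -> ex_Cint h a b ->
  Cint (fun t => g t - h t)%C a b = (Cint g a b - Cint h a b)%C.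
Proof. apply (RInt_minus (V := C_R_CompleteNormedModule)). Qed.

Lemma Cint_const c a b : Cint (fun _ => c) a b = (RtoC (b - a) * c)%C.
Proof. unfold Cint. rewrite (RInt_const (V := C_R_CompleteNormedModule)). apply scal_R_Cmult. Qed.

Lemma Cint_norm_le g a b M : a <= b -> ex_Cint g a b ->
  (forall t, a <= t <= b -> Cmod (g t) <= M) -> Cmod (Cint g a b) <= (b - a) * M.
Proof.
  intros Hab Hex HM. rewrite <- Cmod_norm_R.
  apply (norm_RInt_le_const (V := C_R_NormedModule) g a b); [exact Hab | |].
  - intros x Hx. rewrite Cmod_norm_R. apply HM, Hx.
  - apply (RInt_correct (V := C_R_CompleteNormedModule)), Hex.
Qed.

Lemma Cint_antiderivative G g a b :
  (forall t, Rmin a b <= t <= Rmax a b -> is_pderive G t (g t)) ->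
  (forall t, Rmin a b <= t <= Rmax a b -> pcontinuous g t) ->
  Cint g a b = (G b - G a)%C.
Proof.
  intros HD HC. apply (is_RInt_unique (V := C_R_CompleteNormedModule)).
  apply (is_RInt_derive (V := C_R_CompleteNormedModule) G g a b).
  - intros x Hx. apply is_pderive_is_derive, HD, Hx.
  - intros x Hx. apply pcontinuous_continuous, HC, Hx.
Qed.

Lemma Cint_dist_le g h a b M : a <= b -> ex_Cint g a b -> ex_Cint h a b ->
  (forall t, a <= t <= b -> Cmod (g t - h t) <= M) -> Cmod (Cint g a b - Cint h a b) <= (b - a) * M.
Proof.
  intros Hab Hg Hh HM. rewrite <- Cint_minus by assumption.
  apply Cint_norm_le; [exact Hab | apply (ex_RInt_minus (V := C_R_CompleteNormedModule)); assumption |].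
  exact HM.
Qed.

(** * Goursat's lemma for polar rectangles *)

Definition cis (t : R) : C := (cos t, sin t).
Definition polar (r t : R) : C := (r * cos t, r * sin t).

Lemma polar_cis r t : polar r t = (RtoC r * cis t)%C.
Proof. unfold polar, cis, RtoC, Cmult; simpl. f_equal; ring. Qed.

Lemma Cmod_cis t : Cmod (cis t) = 1.
Proof.
  unfold Cmod, cis; simpl. rewrite !Rmult_1_r, <- !Rsqr_def, Rplus_comm, sin2_cos2. apply sqrt_1.
Qed.

Lemma Cmod_polar r t : Cmod (polar r t) = Rabs r.
Proof. rewrite polar_cis, Cmod_mult, Cmod_R, Cmod_cis. ring. Qed.

Lemma polar_neq0 r t : 0 < r -> polar r t <> 0%C.
Proof.
  intros Hr H. assert (Cmod (polar r t) = 0) as E by (rewrite H; apply Cmod_0).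
  rewrite Cmod_polar, Rabs_right in E; lra.
Qed.

Lemma is_pderive_polar_angle r t : is_pderive (polar r) t (Ci * polar r t)%C.
Proof.
  apply is_pderive_of_Re_Im; unfold polar, Re, Im; simpl;
    auto_derive; auto; ring.
Qed.

Lemma is_pderive_polar_radius r t : is_pderive (fun s => polar s t) r (cis t).
Proof.
  apply is_pderive_of_Re_Im; unfold polar, cis, Re, Im; simpl;
    auto_derive; auto; ring.
Qed.

Lemma Rabs_cos_sin_minus_le x y :
  Rabs (cos x - cos y) <= Rabs (x - y) /\ Rabs (sin x - sin y) <= Rabs (x - y).
Proof.
  pose proof (Rabs_pos (x - y)).
  destruct (MVT_abs cos (fun t => - sin t) y x) as [c [Hc _]].
  { intros c _. apply derivable_pt_lim_cos. }
  destruct (MVT_abs sin cos y x) as [c' [Hc' _]].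
  { intros c' _. apply derivable_pt_lim_sin. }
  rewrite Hc, Hc', Rabs_Ropp.
  assert (Rabs (sin c) <= 1) by (apply Rabs_le, SIN_bound).
  assert (Rabs (cos c') <= 1) by (apply Rabs_le, COS_bound).
  split; nra.
Qed.

Lemma polar_lipschitz r t r' t' :
  Cmod (polar r t - polar r' t') <= Rabs (r - r') + 2 * Rabs r' * Rabs (t - t').
Proof.
  assert (Hcis : Cmod (cis t - cis t') <= 2 * Rabs (t - t')).
  { destruct (Rabs_cos_sin_minus_le t t') as [Hc Hs].
    replace (cis t - cis t')%C with (RtoC (cos t - cos t') + RtoC (sin t - sin t') * Ci)%C
      by (unfold cis, Cminus, Cplus, Copp, Cmult, RtoC, Ci; simpl; f_equal; ring).
    eapply Rle_trans; [apply Cmod_triangle |]. rewrite Cmod_mult, Cmod_Ci, !Cmod_R. lra. }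
  rewrite !polar_cis.
  replace (RtoC r * cis t - RtoC r' * cis t')%C with
    (RtoC (r - r') * cis t + RtoC r' * (cis t - cis t'))%C by (rewrite RtoC_minus; ring).
  eapply Rle_trans; [apply Cmod_triangle |]. rewrite !Cmod_mult, !Cmod_R, Cmod_cis.
  pose proof (Rabs_pos r'). nra.
Qed.

Definition arc_integrand (f : C -> C) (r t : R) : C := (f (polar r t) * (Ci * polar r t))%C.
Definition ray_integrand (f : C -> C) (t r : R) : C := (f (polar r t) * cis t)%C.

(* [PRect r1 r2 t1 t2] stands for the polar rectangle {polar rho t | r1 <= rho <= r2, t1 <= t <= t2};
   [boundary_int f Q] is the integral of f(z) dz along its positively oriented boundary. *)
Record prect := PRect { rad1 : R; rad2 : R; ang1 : R; ang2 : R }.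

Definition boundary_int (f : C -> C) (Q : prect) : C :=
  (Cint (ray_integrand f (ang1 Q)) (rad1 Q) (rad2 Q)
   + Cint (arc_integrand f (rad2 Q)) (ang1 Q) (ang2 Q)
   - Cint (ray_integrand f (ang2 Q)) (rad1 Q) (rad2 Q)
   - Cint (arc_integrand f (rad1 Q)) (ang1 Q) (ang2 Q))%C.

Definition prect_wf (Q : prect) : Prop := rad1 Q <= rad2 Q /\ ang1 Q <= ang2 Q.
Definition in_prect (Q : prect) (rho t : R) : Prop :=
  rad1 Q <= rho <= rad2 Q /\ ang1 Q <= t <= ang2 Q.

(* bounds the diameter of Q when rad2 Q <= 1, by [polar_lipschitz] *)
Definition prect_size (Q : prect) : R := (rad2 Q - rad1 Q) + 2 * (ang2 Q - ang1 Q).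

Definition Ccontinuous_on_annulus (f : C -> C) (s r : R) : Prop :=
  forall rho t, s <= rho <= r -> Ccontinuous f (polar rho t).
Definition holo_on_annulus (f : C -> C) (s r : R) : Prop :=
  forall rho t, s <= rho <= r -> exists l, is_Cderive f (polar rho t) l.

Lemma holo_on_annulus_continuous f s r : holo_on_annulus f s r -> Ccontinuous_on_annulus f s r.
Proof.
  intros H rho t Hrho. destruct (H rho t Hrho) as [l Hl]. apply (is_Cderive_continuous f _ l Hl).
Qed.

Lemma ex_Cint_arc f s r rho t1 t2 : Ccontinuous_on_annulus f s r -> s <= rho <= r ->
  ex_Cint (arc_integrand f rho) t1 t2.
Proof.
  intros Hf Hrho. apply pcontinuous_ex_Cint. intros t _.
  apply pcontinuous_mult.
  - apply (pcontinuous_comp f (polar rho)); [apply Hf, Hrho |].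
    apply (is_pderive_continuous _ _ _ (is_pderive_polar_angle rho t)).
  - apply pcontinuous_mult; [apply pcontinuous_const |].
    apply (is_pderive_continuous _ _ _ (is_pderive_polar_angle rho t)).
Qed.

Lemma ex_Cint_ray f s r t r1 r2 : Ccontinuous_on_annulus f s r -> s <= r1 <= r -> s <= r2 <= r ->
  ex_Cint (ray_integrand f t) r1 r2.
Proof.
  intros Hf H1 H2. apply pcontinuous_ex_Cint. intros rho Hrho.
  apply pcontinuous_mult; [| apply pcontinuous_const].
  apply (pcontinuous_comp f (fun s => polar s t)).
  - apply Hf. split.
    + eapply Rle_trans; [| apply Hrho]. apply Rmin_glb; lra.
    + eapply Rle_trans; [apply Hrho |]. apply Rmax_lub; lra.
  - apply (is_pderive_continuous _ _ _ (is_pderive_polar_radius rho t)).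
Qed.

Lemma boundary_int_split_rad f Q m : Ccontinuous_on_annulus f (rad1 Q) (rad2 Q) ->
  rad1 Q <= m <= rad2 Q ->
  boundary_int f Q = (boundary_int f (PRect (rad1 Q) m (ang1 Q) (ang2 Q))
                      + boundary_int f (PRect m (rad2 Q) (ang1 Q) (ang2 Q)))%C.
Proof.
  intros Hf Hm. unfold boundary_int; simpl.
  rewrite <- (Cint_Chasles (ray_integrand f (ang1 Q)) (rad1 Q) m (rad2 Q))
    by (apply (ex_Cint_ray f (rad1 Q) (rad2 Q)); [exact Hf | lra | lra]).
  rewrite <- (Cint_Chasles (ray_integrand f (ang2 Q)) (rad1 Q) m (rad2 Q))
    by (apply (ex_Cint_ray f (rad1 Q) (rad2 Q)); [exact Hf | lra | lra]).
  ring.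
Qed.

Lemma boundary_int_split_ang f Q m : Ccontinuous_on_annulus f (rad1 Q) (rad2 Q) ->
  rad1 Q <= rad2 Q ->
  boundary_int f Q = (boundary_int f (PRect (rad1 Q) (rad2 Q) (ang1 Q) m)
                      + boundary_int f (PRect (rad1 Q) (rad2 Q) m (ang2 Q)))%C.
Proof.
  intros Hf Hr. unfold boundary_int; simpl.
  rewrite <- (Cint_Chasles (arc_integrand f (rad1 Q)) (ang1 Q) m (ang2 Q))
    by (apply (ex_Cint_arc f (rad1 Q) (rad2 Q)); [exact Hf | lra]).
  rewrite <- (Cint_Chasles (arc_integrand f (rad2 Q)) (ang1 Q) m (ang2 Q))
    by (apply (ex_Cint_arc f (rad1 Q) (rad2 Q)); [exact Hf | lra]).
  ring.
Qed.

Lemma boundary_int_antiderivative f G Q :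
  Ccontinuous_on_annulus f (rad1 Q) (rad2 Q) -> rad1 Q <= rad2 Q ->
  (forall rho t, rad1 Q <= rho <= rad2 Q -> is_Cderive G (polar rho t) (f (polar rho t))) ->
  boundary_int f Q = 0%C.
Proof.
  intros Hf Hr HG.
  assert (Hrad : forall rho t, rad1 Q <= rho <= rad2 Q -> pcontinuous (fun s => f (polar s t)) rho).
  { intros rho t Hrho. apply pcontinuous_comp; [apply Hf, Hrho |].
    apply (is_pderive_continuous _ _ _ (is_pderive_polar_radius rho t)). }
  assert (Harc : forall rho t1 t2, rad1 Q <= rho <= rad2 Q ->
            Cint (arc_integrand f rho) t1 t2 = (G (polar rho t2) - G (polar rho t1))%C).
  { intros rho t1 t2 Hrho. apply (Cint_antiderivative (fun t => G (polar rho t))).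
    - intros t _. eapply is_pderive_ext.
      + apply is_pderive_comp; [apply HG, Hrho | apply is_pderive_polar_angle].
      + unfold arc_integrand. ring.
    - intros t _. apply pcontinuous_mult.
      + apply pcontinuous_comp; [apply Hf, Hrho |].
        apply (is_pderive_continuous _ _ _ (is_pderive_polar_angle rho t)).
      + apply pcontinuous_mult; [apply pcontinuous_const |].
        apply (is_pderive_continuous _ _ _ (is_pderive_polar_angle rho t)). }
  assert (Hray : forall t, Cint (ray_integrand f t) (rad1 Q) (rad2 Q)
                           = (G (polar (rad2 Q) t) - G (polar (rad1 Q) t))%C).
  { intros t.
    apply (Cint_antiderivative (fun s => G (polar s t))); rewrite Rmin_left, Rmax_right by exact Hr.
    - intros rho Hrho. eapply is_pderive_ext.
      + apply is_pderive_comp; [apply HG, Hrho | apply is_pderive_polar_radius].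
      + unfold ray_integrand. ring.
    - intros rho Hrho. apply pcontinuous_mult; [apply Hrad, Hrho | apply pcontinuous_const]. }
  unfold boundary_int. rewrite !Harc, !Hray by lra. ring.
Qed.

Lemma is_Cderive_affine c z0 l z : is_Cderive (fun w => c + (w - z0) * l)%C z l.
Proof.
  eapply is_Cderive_ext.
  - apply is_Cderive_plus; [apply is_Cderive_const |].
    apply is_Cderive_mult; [| apply is_Cderive_const].
    apply is_Cderive_plus; [apply is_Cderive_id | apply is_Cderive_const].
  - cbv beta. ring.
Qed.

Lemma boundary_int_affine c z0 l Q : prect_wf Q ->
  boundary_int (fun w => c + (w - z0) * l)%C Q = 0%C.
Proof.
  intros [Hr _].
  apply (boundary_int_antiderivative _ (fun w => c * w + (w - z0) * (w - z0) * l * / 2)%C);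
    [| exact Hr |].
  - intros rho t _. apply (is_Cderive_continuous _ _ l), is_Cderive_affine.
  - intros rho t _. eapply is_Cderive_ext.
    + apply is_Cderive_plus.
      * apply is_Cderive_mult; [apply is_Cderive_const | apply is_Cderive_id].
      * apply is_Cderive_mult; [| apply is_Cderive_const].
        apply is_Cderive_mult; [| apply is_Cderive_const].
        apply is_Cderive_mult; apply is_Cderive_plus; (apply is_Cderive_id || apply is_Cderive_const).
    + cbv beta. field.
Qed.

Lemma boundary_int_dist_le f g Q eta : 0 <= rad1 Q -> rad2 Q <= 1 -> prect_wf Q ->
  Ccontinuous_on_annulus f (rad1 Q) (rad2 Q) -> Ccontinuous_on_annulus g (rad1 Q) (rad2 Q) ->
  (forall rho t, in_prect Q rho t -> Cmod (f (polar rho t) - g (polar rho t)) <= eta) ->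
  Cmod (boundary_int f Q - boundary_int g Q) <= 2 * eta * prect_size Q.
Proof.
  intros H0 H1 [Hr Ht] Hf Hg Hfg.
  assert (Heta : 0 <= eta).
  { eapply Rle_trans; [apply Cmod_ge_0 | apply (Hfg (rad1 Q) (ang1 Q))]. split; lra. }
  assert (Hray : forall t, ang1 Q <= t <= ang2 Q ->
            Cmod (Cint (ray_integrand f t) (rad1 Q) (rad2 Q)
                  - Cint (ray_integrand g t) (rad1 Q) (rad2 Q))
            <= (rad2 Q - rad1 Q) * eta).
  { intros t Ht'. apply Cint_dist_le; [lra | apply (ex_Cint_ray _ (rad1 Q) (rad2 Q)); auto; lra
                                        | apply (ex_Cint_ray _ (rad1 Q) (rad2 Q)); auto; lra |].
    intros rho Hrho. unfold ray_integrand.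
    replace (f (polar rho t) * cis t - g (polar rho t) * cis t)%C
      with ((f (polar rho t) - g (polar rho t)) * cis t)%C by ring.
    rewrite Cmod_mult, Cmod_cis, Rmult_1_r. apply Hfg. split; lra. }
  assert (Harc : forall rho, rad1 Q <= rho <= rad2 Q ->
            Cmod (Cint (arc_integrand f rho) (ang1 Q) (ang2 Q)
                  - Cint (arc_integrand g rho) (ang1 Q) (ang2 Q))
            <= (ang2 Q - ang1 Q) * eta).
  { intros rho Hrho. apply Cint_dist_le; [lra | apply (ex_Cint_arc _ (rad1 Q) (rad2 Q)); auto
                                            | apply (ex_Cint_arc _ (rad1 Q) (rad2 Q)); auto |].
    intros t Ht'. unfold arc_integrand.
    replace (f (polar rho t) * (Ci * polar rho t) - g (polar rho t) * (Ci * polar rho t))%C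
      with ((f (polar rho t) - g (polar rho t)) * (Ci * polar rho t))%C by ring.
    rewrite !Cmod_mult, Cmod_Ci, Cmod_polar, Rabs_right by lra.
    assert (Cmod (f (polar rho t) - g (polar rho t)) <= eta) by (apply Hfg; split; lra).
    pose proof (Cmod_ge_0 (f (polar rho t) - g (polar rho t))). nra. }
  unfold boundary_int.
  match goal with |- Cmod (?a + ?b - ?c - ?d - (?a' + ?b' - ?c' - ?d')) <= _ =>
    replace (a + b - c - d - (a' + b' - c' - d'))%C
      with ((a - a') + (b - b') + - (c - c') + - (d - d'))%C by ring;
    pose proof (Cmod_triangle ((a - a') + (b - b') + - (c - c')) (- (d - d')));
    pose proof (Cmod_triangle ((a - a') + (b - b')) (- (c - c')));
    pose proof (Cmod_triangle (a - a') (b - b'));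
    rewrite Cmod_opp in *
  end.
  pose proof (Hray (ang1 Q) ltac:(lra)). pose proof (Hray (ang2 Q) ltac:(lra)).
  pose proof (Harc (rad1 Q) ltac:(lra)). pose proof (Harc (rad2 Q) ltac:(lra)).
  unfold prect_size. nra.
Qed.

Lemma boundary_int_local_le f Q rho0 t0 l eps del :
  0 <= rad1 Q -> rad2 Q <= 1 -> prect_wf Q -> Ccontinuous_on_annulus f (rad1 Q) (rad2 Q) ->
  in_prect Q rho0 t0 -> 0 <= eps ->
  (forall w, Cmod (w - polar rho0 t0) < del ->
     Cmod (f w - f (polar rho0 t0) - (w - polar rho0 t0) * l) <= eps * Cmod (w - polar rho0 t0)) ->
  prect_size Q < del ->
  Cmod (boundary_int f Q) <= 2 * eps * prect_size Q ^ 2.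
Proof.
  intros H0 H1 HQ Hf [Hrho0 Ht0] Heps Hd Hdel.
  set (z0 := polar rho0 t0) in *.
  set (A := (fun w => f z0 + (w - z0) * l)%C).
  replace (boundary_int f Q) with (boundary_int f Q - boundary_int A Q)%C
    by (unfold A; rewrite boundary_int_affine by exact HQ; ring).
  replace (2 * eps * prect_size Q ^ 2) with (2 * (eps * prect_size Q) * prect_size Q) by ring.
  apply boundary_int_dist_le; try assumption.
  - intros rho t _. apply (is_Cderive_continuous _ _ l), is_Cderive_affine.
  - intros rho t [Hrho Ht].
    assert (Hz : Cmod (polar rho t - z0) <= prect_size Q).
    { unfold z0. eapply Rle_trans; [apply polar_lipschitz |].
      rewrite (Rabs_right rho0) by lra.
      assert (Rabs (rho - rho0) <= rad2 Q - rad1 Q) by (apply Rabs_le; lra).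
      assert (Rabs (t - t0) <= ang2 Q - ang1 Q) by (apply Rabs_le; lra).
      pose proof (Rabs_pos (t - t0)). unfold prect_size. nra. }
    unfold A.
    replace (f (polar rho t) - (f z0 + (polar rho t - z0) * l))%C
      with (f (polar rho t) - f z0 - (polar rho t - z0) * l)%C by ring.
    eapply Rle_trans; [apply Hd; lra |]. apply Rmult_le_compat_l; lra.
Qed.

Definition prect_quarter (low_rad low_ang : bool) (Q : prect) : prect :=
  let mr := (rad1 Q + rad2 Q) / 2 in
  let mt := (ang1 Q + ang2 Q) / 2 in
  PRect (if low_rad then rad1 Q else mr) (if low_rad then mr else rad2 Q)
        (if low_ang then ang1 Q else mt) (if low_ang then mt else ang2 Q).

Lemma Ccontinuous_on_annulus_sub f s r s' r' :
  s <= s' -> r' <= r -> Ccontinuous_on_annulus f s r -> Ccontinuous_on_annulus f s' r'.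
Proof. intros Hs Hr Hf rho t Hrho. apply Hf. lra. Qed.

Lemma boundary_int_quarters f Q : prect_wf Q -> Ccontinuous_on_annulus f (rad1 Q) (rad2 Q) ->
  boundary_int f Q =
  (boundary_int f (prect_quarter true true Q) + boundary_int f (prect_quarter true false Q)
   + boundary_int f (prect_quarter false true Q) + boundary_int f (prect_quarter false false Q))%C.
Proof.
  intros [Hr Ht] Hf.
  rewrite (boundary_int_split_rad f Q ((rad1 Q + rad2 Q) / 2)) by (auto; lra).
  rewrite (boundary_int_split_ang f (PRect _ _ _ _) ((ang1 Q + ang2 Q) / 2));
    [| apply (Ccontinuous_on_annulus_sub f (rad1 Q) (rad2 Q)); simpl; auto; lra | simpl; lra].
  rewrite (boundary_int_split_ang f (PRect ((rad1 Q + rad2 Q) / 2) _ _ _) ((ang1 Q + ang2 Q) / 2));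
    [| apply (Ccontinuous_on_annulus_sub f (rad1 Q) (rad2 Q)); simpl; auto; lra | simpl; lra].
  unfold prect_quarter; simpl. ring.
Qed.

Definition subquarter (Q' Q : prect) : Prop :=
  rad1 Q <= rad1 Q' /\ rad2 Q' <= rad2 Q /\ ang1 Q <= ang1 Q' /\ ang2 Q' <= ang2 Q /\
  rad2 Q' - rad1 Q' = (rad2 Q - rad1 Q) / 2 /\ ang2 Q' - ang1 Q' = (ang2 Q - ang1 Q) / 2.

Definition heavy_quarter (f : C -> C) (Q : prect) : prect :=
  let heavy Q' := Rle_dec (Cmod (boundary_int f Q) / 4) (Cmod (boundary_int f Q')) in
  if heavy (prect_quarter true true Q) then prect_quarter true true Q else
  if heavy (prect_quarter true false Q) then prect_quarter true false Q else
  if heavy (prect_quarter false true Q) then prect_quarter false true Q else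
  prect_quarter false false Q.

Lemma heavy_quarter_spec f Q : prect_wf Q -> Ccontinuous_on_annulus f (rad1 Q) (rad2 Q) ->
  Cmod (boundary_int f Q) <= 4 * Cmod (boundary_int f (heavy_quarter f Q)) /\
  subquarter (heavy_quarter f Q) Q.
Proof.
  intros HQ Hf. pose proof (boundary_int_quarters f Q HQ Hf) as Hsum. destruct HQ as [Hr Ht].
  assert (Hsub : forall i j, subquarter (prect_quarter i j Q) Q)
    by (intros [] []; unfold subquarter, prect_quarter; simpl; lra).
  unfold heavy_quarter.
  repeat (destruct (Rle_dec _ _); [split; [lra | apply Hsub] |]).
  split; [| apply Hsub].
  match type of Hsum with _ = (?a + ?b + ?c + ?d)%C =>
    pose proof (Cmod_triangle (a + b + c) d); pose proof (Cmod_triangle (a + b) c);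
    pose proof (Cmod_triangle a b) end.
  rewrite <- Hsum in *. lra.
Qed.

Fixpoint bisection (f : C -> C) (Q : prect) (n : nat) : prect :=
  match n with O => Q | S n => heavy_quarter f (bisection f Q n) end.

Lemma bisection_spec f Q n : prect_wf Q -> Ccontinuous_on_annulus f (rad1 Q) (rad2 Q) ->
  prect_wf (bisection f Q n) /\ rad1 Q <= rad1 (bisection f Q n) /\ rad2 (bisection f Q n) <= rad2 Q /\
  Cmod (boundary_int f Q) <= 4 ^ n * Cmod (boundary_int f (bisection f Q n)) /\
  prect_size (bisection f Q n) = prect_size Q / 2 ^ n /\
  subquarter (bisection f Q (S n)) (bisection f Q n).
Proof.
  intros HQ Hf.
  assert (Hstep : forall Q', prect_wf Q' -> rad1 Q <= rad1 Q' -> rad2 Q' <= rad2 Q ->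
            Cmod (boundary_int f Q') <= 4 * Cmod (boundary_int f (heavy_quarter f Q')) /\
            subquarter (heavy_quarter f Q') Q').
  { intros Q' HQ' H1 H2. apply heavy_quarter_spec; [exact HQ' |].
    apply (Ccontinuous_on_annulus_sub f (rad1 Q) (rad2 Q)); assumption. }
  induction n as [| n IH].
  - simpl. split; [exact HQ |]. do 3 (split; [lra |]). split; [field |].
    apply Hstep; [exact HQ | lra | lra].
  - destruct IH as [[Hr Ht] [H1 [H2 [Hb [Hs Hsub]]]]].
    destruct Hsub as [S1 [S2 [S3 [S4 [S5 S6]]]]].
    destruct (Hstep (bisection f Q n)) as [HB _]; [split; lra | lra | lra |].
    simpl bisection in *. set (Q' := heavy_quarter f (bisection f Q n)) in *.
    assert (Hwf' : prect_wf Q') by (split; lra).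
    split; [exact Hwf' |]. split; [lra |]. split; [lra |]. split; [| split].
    + rewrite <- tech_pow_Rmult. pose proof (Cmod_ge_0 (boundary_int f Q')).
      pose proof (pow_le 4 n ltac:(lra)). nra.
    + unfold prect_size in *. rewrite S5, S6, <- tech_pow_Rmult.
      match type of Hs with ?l = _ => replace (_ + _) with (l / 2) by field end.
      rewrite Hs. field. apply pow_nonzero. lra.
    + apply Hstep; [exact Hwf' | lra | lra].
Qed.

Lemma nested_intervals (a b : nat -> R) : (forall n, a n <= a (S n)) -> (forall n, b (S n) <= b n) ->
  (forall n, a n <= b n) -> exists x, forall n, a n <= x <= b n.
Proof.
  intros Ha Hb Hab.
  assert (Ma : forall n m, (n <= m)%nat -> a n <= a m).
  { intros n m Hnm. induction Hnm; [lra | specialize (Ha m); lra]. }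
  assert (Mb : forall n m, (n <= m)%nat -> b m <= b n).
  { intros n m Hnm. induction Hnm; [lra | specialize (Hb m); lra]. }
  assert (Hab' : forall n m, a n <= b m).
  { intros n m. destruct (Nat.le_ge_cases n m) as [H | H].
    - specialize (Ma n m H). specialize (Hab m). lra.
    - specialize (Mb m n H). specialize (Hab n). lra. }
  destruct (completeness (fun y => exists n, y = a n)) as [x [Hx1 Hx2]].
  - exists (b O). intros y [n ->]. apply Hab'.
  - exists (a O), O. reflexivity.
  - exists x. intros n. split.
    + apply Hx1. exists n. reflexivity.
    + apply Hx2. intros y [m ->]. apply Hab'.
Qed.

Lemma bisection_common_point f Q : prect_wf Q -> Ccontinuous_on_annulus f (rad1 Q) (rad2 Q) ->
  exists rho0 t0, forall n, in_prect (bisection f Q n) rho0 t0.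
Proof.
  intros HQ Hc.
  assert (Hnest : forall n,
            prect_wf (bisection f Q n) /\ subquarter (bisection f Q (S n)) (bisection f Q n))
    by (intros n; destruct (bisection_spec f Q n HQ Hc) as [? [_ [_ [_ [_ ?]]]]]; split; assumption).
  destruct (nested_intervals (fun n => rad1 (bisection f Q n)) (fun n => rad2 (bisection f Q n)))
    as [rho0 Hrho0]; intros; try (destruct (Hnest n) as [[? ?] [? [? [? [? ?]]]]]; lra).
  destruct (nested_intervals (fun n => ang1 (bisection f Q n)) (fun n => ang2 (bisection f Q n)))
    as [t0 Ht0]; intros; try (destruct (Hnest n) as [[? ?] [? [? [? [? ?]]]]]; lra).
  exists rho0, t0. intros n. split; [apply Hrho0 | apply Ht0].
Qed.

Lemma exists_pow2_gt x : exists n, x < 2 ^ n.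
Proof.
  destruct (Pow_x_infinity 2 ltac:(rewrite Rabs_right; lra) (x + 1)) as [n Hn].
  exists n. specialize (Hn n (le_n n)). rewrite Rabs_right in Hn by (left; apply pow_lt; lra). lra.
Qed.

(* Along the nested heavy quarters Q_n the boundary integral is at least 4^-n times the original
   one, while near their common point f is affine up to o(|z - z0|), which makes it o(4^-n). *)
Theorem goursat f Q : 0 <= rad1 Q -> rad2 Q <= 1 -> prect_wf Q ->
  holo_on_annulus f (rad1 Q) (rad2 Q) -> boundary_int f Q = 0%C.
Proof.
  intros H0 H1 HQ Hf.
  pose proof (holo_on_annulus_continuous f _ _ Hf) as Hc.
  pose proof (fun n => bisection_spec f Q n HQ Hc) as Hbis.
  set (X := Cmod (boundary_int f Q)).
  destruct (Req_dec X 0) as [HX | HX]; [apply Cmod_eq_0, HX |].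
  exfalso. assert (HXp : 0 < X) by (pose proof (Cmod_ge_0 (boundary_int f Q)); unfold X in *; lra).
  destruct (bisection_common_point f Q HQ Hc) as [rho0 [t0 Hin]].
  destruct (Hf rho0 t0) as [l Hl]; [apply (Hin O) |].
  set (L := prect_size Q).
  assert (HL : 0 <= L) by (destruct HQ; unfold L, prect_size; lra).
  set (eps := X / (2 * L ^ 2 + 1)).
  assert (Heps : 0 < eps) by (apply Rdiv_lt_0_compat; nra).
  destruct (Hl eps Heps) as [del [Hdel Hd]].
  destruct (exists_pow2_gt (L / del)) as [n Hn].
  destruct (Hbis n) as [HQn [Hr1 [Hr2 [HB [Hsize _]]]]]. fold L in Hsize.
  assert (H2n : 0 < 2 ^ n) by (apply pow_lt; lra).
  assert (Hsmall : prect_size (bisection f Q n) < del).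
  { rewrite Hsize. apply Rmult_lt_reg_r with (2 ^ n / del); [apply Rdiv_lt_0_compat; lra |].
    replace (L / 2 ^ n * (2 ^ n / del)) with (L / del) by (field; lra).
    replace (del * (2 ^ n / del)) with (2 ^ n) by (field; lra). exact Hn. }
  pose proof (boundary_int_local_le f (bisection f Q n) rho0 t0 l eps del ltac:(lra) ltac:(lra) HQn
    ltac:(apply (Ccontinuous_on_annulus_sub f (rad1 Q) (rad2 Q)); assumption)
    (Hin n) ltac:(lra) Hd Hsmall) as Hloc.
  rewrite Hsize in Hloc.
  assert (E : 4 ^ n * (2 * eps * (L / 2 ^ n) ^ 2) = 2 * eps * L ^ 2).
  { replace 4 with (2 * 2) by ring. rewrite Rpow_mult_distr. field. lra. }
  assert (X <= 2 * eps * L ^ 2).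
  { rewrite <- E. eapply Rle_trans; [exact HB |].
    apply Rmult_le_compat_l; [apply pow_le; lra | exact Hloc]. }
  assert (2 * eps * L ^ 2 < X).
  { unfold eps. apply Rmult_lt_reg_r with (2 * L ^ 2 + 1); [nra |].
    replace (2 * (X / (2 * L ^ 2 + 1)) * L ^ 2 * (2 * L ^ 2 + 1)) with (2 * L ^ 2 * X) by (field; nra).
    nra. }
  lra.
Qed.

(** * Schwarz's bound on the derivative at 0 *)

Definition circle_int (f : C -> C) (r : R) : C := Cint (arc_integrand f r) 0 (2 * PI).

Lemma circle_int_radius_indep f s r : 0 <= s <= r -> r <= 1 -> holo_on_annulus f s r ->
  circle_int f r = circle_int f s.
Proof.
  intros Hs Hr Hf.
  assert (G : boundary_int f (PRect s r 0 (2 * PI)) = 0%C)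
    by (pose proof PI_RGT_0; apply goursat; simpl; [lra | lra | split; simpl; lra | exact Hf]).
  assert (Hray : ray_integrand f (2 * PI) = ray_integrand f 0)
    by (unfold ray_integrand, polar, cis; rewrite cos_2PI, sin_2PI, cos_0, sin_0; reflexivity).
  unfold boundary_int in G; simpl in G. rewrite Hray in G.
  unfold circle_int.
  match type of G with ?A = _ => replace (Cint (arc_integrand f r) 0 (2 * PI)) with
    (A + Cint (arc_integrand f s) 0 (2 * PI))%C by ring end.
  rewrite G. ring.
Qed.

Lemma holo_on_annulus_div_sq k s r : (forall z, inD z -> exists l, is_Cderive k z l) ->
  0 < s -> r < 1 -> holo_on_annulus (fun z => k z * / (z * z))%C s r.
Proof.
  intros Hk Hs Hr rho t Hrho.
  set (z := polar rho t).
  assert (Hz : z <> 0%C) by (apply polar_neq0; lra).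
  destruct (Hk z) as [lk Hlk]; [unfold inD, z; rewrite Cmod_polar, Rabs_right; lra |].
  eexists. apply is_Cderive_mult; [exact Hlk |].
  apply (is_Cderive_comp Cinv (fun w => w * w)%C); [apply is_Cderive_inv, Cmult_neq_0; exact Hz |].
  apply is_Cderive_mult; apply is_Cderive_id.
Qed.

Lemma arc_integrand_div_sq k r t : 0 < r ->
  arc_integrand (fun z => k z * / (z * z))%C r t = (Ci * k (polar r t) * / polar r t)%C.
Proof.
  intros Hr. pose proof (polar_neq0 r t Hr). unfold arc_integrand. field. exact H.
Qed.

Lemma circle_int_div_sq_le k r : (forall z, inD z -> exists l, is_Cderive k z l) ->
  (forall z, inD z -> inD (k z)) -> 0 < r < 1 ->
  Cmod (circle_int (fun z => k z * / (z * z))%C r) <= 2 * PI / r.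
Proof.
  intros Hk HkD Hr. unfold circle_int.
  replace (2 * PI / r) with ((2 * PI - 0) * / r) by (unfold Rdiv; ring).
  apply Cint_norm_le; [pose proof PI_RGT_0; lra | |].
  - apply (ex_Cint_arc _ r r); [| lra].
    apply holo_on_annulus_continuous, holo_on_annulus_div_sq; auto; lra.
  - intros t _. rewrite arc_integrand_div_sq by lra.
    rewrite !Cmod_mult, Cmod_inv, Cmod_Ci, Cmod_polar, Rabs_right by (try apply polar_neq0; lra).
    assert (Cmod (k (polar r t)) < 1) by (apply HkD; unfold inD; rewrite Cmod_polar, Rabs_right; lra).
    pose proof (Cmod_ge_0 (k (polar r t))). assert (0 < / r) by (apply Rinv_0_lt_compat; lra). nra.
Qed.

(* For k(0) = 0 the integrand i k(z)/z tends uniformly to i k'(0) as |z| -> 0. *)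
Lemma circle_int_div_sq_near_0 k l0 eta : (forall z, inD z -> exists l, is_Cderive k z l) ->
  k 0%C = 0%C -> is_Cderive k 0%C l0 -> 0 < eta ->
  exists del, 0 < del /\ forall s, 0 < s < del -> s < 1 ->
    Cmod (circle_int (fun z => k z * / (z * z))%C s - RtoC (2 * PI) * (Ci * l0)) <= 2 * PI * eta.
Proof.
  intros Hk Hk0 Hl0 Heta. destruct (Hl0 eta Heta) as [del [Hdel Hd]].
  exists del. split; [exact Hdel |]. intros s Hs Hs1.
  unfold circle_int.
  replace (RtoC (2 * PI)) with (RtoC (2 * PI - 0)) by (f_equal; ring).
  rewrite <- Cint_const. replace (2 * PI * eta) with ((2 * PI - 0) * eta) by ring.
  apply Cint_dist_le; [pose proof PI_RGT_0; lra | |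
                       apply pcontinuous_ex_Cint; intros; apply pcontinuous_const |].
  - apply (ex_Cint_arc _ s s); [| lra].
    apply holo_on_annulus_continuous, holo_on_annulus_div_sq; auto; lra.
  - intros t _. rewrite arc_integrand_div_sq by lra.
    assert (Hz : polar s t <> 0%C) by (apply polar_neq0; lra).
    replace (Ci * k (polar s t) * / polar s t - Ci * l0)%C with
      (Ci * (k (polar s t) - k 0%C - (polar s t - 0) * l0) * / polar s t)%C
      by (rewrite Hk0; field; exact Hz).
    rewrite !Cmod_mult, Cmod_inv, Cmod_Ci, Cmod_polar, Rabs_right by (auto; lra).
    assert (Hps : Cmod (polar s t - 0) = s)
      by (replace (polar s t - 0)%C with (polar s t) by ring; rewrite Cmod_polar, Rabs_right; lra).
    assert (Cmod (k (polar s t) - k 0%C - (polar s t - 0) * l0) <= eta * s)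
      by (eapply Rle_trans; [apply Hd; lra | rewrite Hps; lra]).
    rewrite Rmult_1_l. replace eta with (eta * s * / s) by (field; lra).
    apply Rmult_le_compat_r; [left; apply Rinv_0_lt_compat; lra | assumption].
Qed.

(* The circle integral of k(z)/z^2 is independent of the radius r, at most 2 pi / r in norm, and
   tends to 2 pi i k'(0) as r -> 0. *)
Theorem schwarz_deriv k l0 : (forall z, inD z -> exists l, is_Cderive k z l) ->
  (forall z, inD z -> inD (k z)) -> k 0%C = 0%C -> is_Cderive k 0%C l0 -> Cmod l0 <= 1.
Proof.
  intros Hk HkD Hk0 Hl0.
  destruct (Rle_dec (Cmod l0) 1) as [H | H]; [exact H | exfalso].
  set (eta := (Cmod l0 - 1) / 3).
  assert (Heta : 0 < eta) by (unfold eta; lra).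
  set (r := / (1 + eta)).
  assert (Hr : 0 < r < 1).
  { unfold r. split; [apply Rinv_0_lt_compat; lra |]. rewrite <- Rinv_1. apply Rinv_lt_contravar; lra. }
  destruct (circle_int_div_sq_near_0 k l0 eta Hk Hk0 Hl0 Heta) as [del [Hdel Hd]].
  set (s := Rmin (del / 2) r).
  assert (Hs : 0 < s <= r) by (split; [apply Rmin_pos; lra | apply Rmin_r]).
  assert (Hsd : s < del) by (eapply Rle_lt_trans; [apply Rmin_l | lra]).
  specialize (Hd s ltac:(lra) ltac:(lra)).
  rewrite <- (circle_int_radius_indep _ s r) in Hd
    by (try apply holo_on_annulus_div_sq; auto; lra).
  pose proof (circle_int_div_sq_le k r Hk HkD Hr) as Hbig.
  set (I := circle_int (fun z => k z * / (z * z))%C r) in *.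
  assert (Htri : Cmod (RtoC (2 * PI) * (Ci * l0)) <= Cmod I + 2 * PI * eta).
  { pose proof (Cmod_triangle I (- (I - RtoC (2 * PI) * (Ci * l0)))) as T.
    rewrite Cmod_opp in T. replace (I + - (I - RtoC (2 * PI) * (Ci * l0)))%C
      with (RtoC (2 * PI) * (Ci * l0))%C in T by ring. lra. }
  pose proof PI_RGT_0.
  rewrite !Cmod_mult, Cmod_R, Cmod_Ci, Rabs_right in Htri by lra.
  replace (2 * PI / r) with (2 * PI * (1 + eta)) in Hbig by (unfold r; field; lra).
  assert (Cmod l0 <= 1 + 2 * eta) by (apply Rmult_le_reg_l with (2 * PI); lra).
  unfold eta in *. lra.
Qed.

(** * Moebius maps and the Schwarz-Pick lemma *)

Definition mobius (a z : C) : C := ((a - z) * / (1 - Cconj a * z))%C.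

Lemma Cmult_integral (x y : C) : (x * y)%C = 0%C -> x = 0%C \/ y = 0%C.
Proof.
  intros H. assert (E : Cmod x * Cmod y = 0) by (rewrite <- Cmod_mult, H; apply Cmod_0).
  apply Rmult_integral in E. destruct E; [left | right]; apply Cmod_eq_0; assumption.
Qed.

Lemma Cmod_sqr (z : C) : Cmod z * Cmod z = Re z * Re z + Im z * Im z.
Proof. pose proof (Cmod2_alt z). simpl in H. lra. Qed.

Lemma Cconj_mult_self (a : C) : (Cconj a * a)%C = RtoC (Cmod a * Cmod a).
Proof.
  rewrite Cmod_sqr. destruct a as [a1 a2]. unfold Cconj, Cmult, RtoC, Re, Im; simpl. f_equal; ring.
Qed.

Lemma Cmod_conj_mult_self_minus_1 a : inD a -> Cmod (Cconj a * a - 1)%C = 1 - Cmod a * Cmod a.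
Proof.
  intros Ha. unfold inD in Ha. pose proof (Cmod_ge_0 a).
  rewrite Cconj_mult_self, <- RtoC_minus, Cmod_R, Rabs_left1; [ring | nra].
Qed.

Lemma mobius_denom_neq0 a z : inD a -> inD z -> (1 - Cconj a * z)%C <> 0%C.
Proof.
  intros Ha Hz H. unfold inD in *.
  assert (Cmod (Cconj a * z) < 1).
  { rewrite Cmod_mult, Cmod_conj. pose proof (Cmod_ge_0 a). pose proof (Cmod_ge_0 z). nra. }
  replace (Cconj a * z)%C with (1 - (1 - Cconj a * z))%C in H0 by ring.
  rewrite H in H0. replace (1 - 0)%C with (RtoC 1) in H0 by ring. rewrite Cmod_1 in H0. lra.
Qed.

Lemma mobius_inD a z : inD a -> inD z -> inD (mobius a z).
Proof.
  intros Ha Hz. pose proof (mobius_denom_neq0 a z Ha Hz) as HD. unfold inD, mobius in *.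
  rewrite Cmod_mult, Cmod_inv by exact HD.
  assert (Hkey : Cmod (1 - Cconj a * z) * Cmod (1 - Cconj a * z) - Cmod (a - z) * Cmod (a - z)
                 = (1 - Cmod a * Cmod a) * (1 - Cmod z * Cmod z)).
  { rewrite !Cmod_sqr. destruct a as [a1 a2], z as [z1 z2].
    unfold Cconj, Cminus, Cplus, Copp, Cmult, Re, Im; simpl. ring. }
  pose proof (Cmod_ge_0 a). pose proof (Cmod_ge_0 z). pose proof (Cmod_ge_0 (a - z)).
  assert (Hd : 0 < Cmod (1 - Cconj a * z)) by (apply Cmod_gt_0, HD).
  assert (0 < (1 - Cmod a * Cmod a) * (1 - Cmod z * Cmod z)) by (apply Rmult_lt_0_compat; nra).
  apply Rmult_lt_reg_r with (Cmod (1 - Cconj a * z)); [exact Hd |].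
  rewrite Rmult_assoc, Rinv_l, Rmult_1_l, Rmult_1_r by lra. nra.
Qed.

Lemma mobius_involutive a z : inD a -> inD z -> mobius a (mobius a z) = z.
Proof.
  intros Ha Hz. unfold mobius.
  pose proof (mobius_denom_neq0 a z Ha Hz). pose proof (mobius_denom_neq0 a a Ha Ha).
  assert (E : (1 - Cconj a * ((a - z) * / (1 - Cconj a * z)))%C
              = ((1 - Cconj a * a) * / (1 - Cconj a * z))%C) by (field; assumption).
  rewrite E. field. split; assumption.
Qed.

Lemma mobius_0 a : mobius a 0%C = a.
Proof. unfold mobius. replace (1 - Cconj a * 0)%C with (RtoC 1) by ring. field. Qed.

Lemma mobius_self a : mobius a a = 0%C.
Proof. unfold mobius. replace (a - a)%C with (RtoC 0) by ring. ring. Qed.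

Definition mobius_deriv (a z : C) : C :=
  ((Cconj a * a - 1) * / ((1 - Cconj a * z) * (1 - Cconj a * z)))%C.

Lemma is_Cderive_mobius a z : inD a -> inD z -> is_Cderive (mobius a) z (mobius_deriv a z).
Proof.
  intros Ha Hz. pose proof (mobius_denom_neq0 a z Ha Hz) as HD.
  eapply is_Cderive_ext.
  - apply is_Cderive_mult.
    + apply is_Cderive_plus; [apply is_Cderive_const | apply is_Cderive_opp, is_Cderive_id].
    + apply (is_Cderive_comp Cinv (fun w => 1 - Cconj a * w)%C); [apply is_Cderive_inv, HD |].
      apply is_Cderive_plus; [apply is_Cderive_const |].
      apply is_Cderive_opp, is_Cderive_mult; [apply is_Cderive_const | apply is_Cderive_id].
  - unfold mobius_deriv. cbv beta. field. exact HD.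
Qed.

Lemma mobius_deriv_0 a : mobius_deriv a 0%C = (Cconj a * a - 1)%C.
Proof. unfold mobius_deriv. replace (1 - Cconj a * 0)%C with (RtoC 1) by ring. field. Qed.

Lemma Cconj_mult_self_minus_1_neq0 a : inD a -> (Cconj a * a - 1)%C <> 0%C.
Proof.
  intros Ha E. apply (mobius_denom_neq0 a a Ha Ha).
  replace (1 - Cconj a * a)%C with (- (Cconj a * a - 1))%C by ring. rewrite E. ring.
Qed.

Lemma mobius_deriv_self a : inD a -> mobius_deriv a a = (/ (Cconj a * a - 1))%C.
Proof.
  intros Ha. pose proof (Cconj_mult_self_minus_1_neq0 a Ha). unfold mobius_deriv.
  replace (1 - Cconj a * a)%C with (- (Cconj a * a - 1))%C by ring. field. exact H.
Qed.

Lemma AutD_mobius a : inD a -> AutD (mobius a).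
Proof.
  intros Ha.
  assert (Hh : holo_on_D (mobius a))
    by (apply holo_on_D_is_Cderive; intros z Hz; eexists; apply is_Cderive_mobius; assumption).
  split; [intros z; apply mobius_inD, Ha |]. split; [exact Hh |].
  exists (mobius a). repeat split; try exact Hh; intros z Hz.
  - apply mobius_inD; assumption.
  - apply mobius_involutive; assumption.
  - apply mobius_involutive; assumption.
Qed.

Lemma AutD_id : AutD (fun z => z).
Proof.
  assert (Hh : holo_on_D (fun z => z))
    by (apply holo_on_D_is_Cderive; intros z _; eexists; apply is_Cderive_id).
  split; [auto |]. split; [exact Hh |]. exists (fun z => z). repeat split; auto.
Qed.

Lemma holo_on_D_comp f g : (forall z, inD z -> inD (g z)) -> holo_on_D f -> holo_on_D g ->
  holo_on_D (fun z => f (g z)).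
Proof.
  rewrite !holo_on_D_is_Cderive. intros HgD Hf Hg z Hz.
  destruct (Hg z Hz) as [lg Hlg]. destruct (Hf (g z) (HgD z Hz)) as [lf Hlf].
  eexists. apply is_Cderive_comp; eassumption.
Qed.

Lemma AutD_comp f g : AutD f -> AutD g -> AutD (fun z => f (g z)).
Proof.
  intros [Hf1 [Hf2 [f' [Hf'1 [Hf'2 [Hf'3 Hf'4]]]]]] [Hg1 [Hg2 [g' [Hg'1 [Hg'2 [Hg'3 Hg'4]]]]]].
  split; [auto |]. split; [apply holo_on_D_comp; assumption |].
  exists (fun z => g' (f' z)). split; [auto |]. split; [apply holo_on_D_comp; assumption |].
  split; intros z Hz.
  - rewrite Hf'3; auto.
  - rewrite Hg'4; auto.
Qed.

Lemma AutD_inverse f : AutD f ->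
  exists g, AutD g /\ (forall z, inD z -> g (f z) = z) /\ (forall z, inD z -> f (g z) = z).
Proof.
  intros [Hf1 [Hf2 [g [Hg1 [Hg2 [Hgf Hfg]]]]]].
  exists g. repeat split; auto. exists f. repeat split; auto.
Qed.

(* Conjugating by Moebius maps moves z0 and chi z0 to 0, where the Schwarz lemma applies. *)
Theorem schwarz_pick_deriv chi z0 l : (forall z, inD z -> inD (chi z)) -> holo_on_D chi ->
  inD z0 -> is_Cderive chi z0 l -> Cmod l * (1 - Cmod z0 * Cmod z0) <= 1 - Cmod (chi z0) * Cmod (chi z0).
Proof.
  intros HcD Hc Hz0 Hl. rewrite holo_on_D_is_Cderive in Hc.
  set (w0 := chi z0). assert (Hw0 : inD w0) by (apply HcD, Hz0).
  set (k := fun z => mobius w0 (chi (mobius z0 z))).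
  assert (H0D : inD 0%C) by (unfold inD; rewrite Cmod_0; lra).
  assert (Hk : forall z, inD z -> exists l, is_Cderive k z l).
  { intros z Hz. assert (HMz : inD (mobius z0 z)) by (apply mobius_inD; assumption).
    destruct (Hc _ HMz) as [l1 H1].
    eexists. apply (is_Cderive_comp (mobius w0) (fun z => chi (mobius z0 z))).
    - apply is_Cderive_mobius; [exact Hw0 | apply HcD, HMz].
    - apply (is_Cderive_comp chi (mobius z0)); [exact H1 | apply is_Cderive_mobius; assumption]. }
  assert (HkD : forall z, inD z -> inD (k z))
    by (intros z Hz; apply mobius_inD; [exact Hw0 | apply HcD, mobius_inD; assumption]).
  assert (Hk0 : k 0%C = 0%C) by (unfold k; rewrite mobius_0; apply mobius_self).
  assert (Hk' : is_Cderive k 0%C (mobius_deriv z0 0 * l * mobius_deriv w0 w0)%C).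
  { apply (is_Cderive_comp (mobius w0) (fun z => chi (mobius z0 z))).
    - rewrite mobius_0. apply is_Cderive_mobius; assumption.
    - apply (is_Cderive_comp chi (mobius z0)); [rewrite mobius_0; exact Hl |].
      apply is_Cderive_mobius; assumption. }
  pose proof (schwarz_deriv k _ Hk HkD Hk0 Hk') as HS.
  rewrite mobius_deriv_0, mobius_deriv_self in HS by exact Hw0.
  rewrite !Cmod_mult, Cmod_inv, !Cmod_conj_mult_self_minus_1 in HS
    by (auto; apply Cconj_mult_self_minus_1_neq0, Hw0).
  unfold inD in *. pose proof (Cmod_ge_0 w0). pose proof (Cmod_ge_0 z0). pose proof (Cmod_ge_0 l).
  assert (Hp : 0 < 1 - Cmod w0 * Cmod w0) by nra.
  apply Rmult_le_reg_r with (/ (1 - Cmod w0 * Cmod w0)); [apply Rinv_0_lt_compat, Hp |].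
  rewrite Rinv_r by lra. fold w0. lra.
Qed.

(** * The Schwarz lemma by integration along a radius *)

(* twice the hyperbolic distance from 0 to x, for 0 <= x < 1 *)
Definition log_ratio (x : R) : R := ln (1 + x) - ln (1 - x).

Lemma log_ratio_nonneg x : 0 <= x < 1 -> 0 <= log_ratio x.
Proof.
  intros Hx. unfold log_ratio. destruct (Req_dec x 0) as [-> | Hx0].
  - rewrite Rplus_0_r, Rminus_0_r. lra.
  - assert (ln (1 - x) < ln (1 + x)) by (apply ln_increasing; lra). lra.
Qed.

Lemma log_ratio_le x : 0 <= x < 1 / 2 -> log_ratio x <= 4 * x.
Proof.
  intros Hx. unfold log_ratio. rewrite <- ln_div by lra.
  pose proof (exp_ineq1_le (ln ((1 + x) / (1 - x)))) as H.
  rewrite exp_ln in H by (apply Rdiv_lt_0_compat; lra).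
  assert ((1 + x) / (1 - x) - 1 <= 4 * x).
  { replace ((1 + x) / (1 - x) - 1) with (2 * x / (1 - x)) by (field; lra).
    apply Rmult_le_reg_r with (1 - x); [lra |].
    unfold Rdiv. rewrite Rmult_assoc, Rinv_l by lra. nra. }
  lra.
Qed.

Lemma log_ratio_lt x y : 0 <= x -> x < y -> y < 1 -> log_ratio x < log_ratio y.
Proof.
  intros Hx Hxy Hy. unfold log_ratio.
  assert (ln (1 + x) < ln (1 + y)) by (apply ln_increasing; lra).
  assert (ln (1 - y) < ln (1 - x)) by (apply ln_increasing; lra).
  lra.
Qed.

Lemma is_derive_log_ratio_gap c U t d : 0 < t * c < 1 -> 0 < U t < 1 -> is_derive U t d ->
  d * (1 - t * c * (t * c)) <= c * (1 - U t * U t) ->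
  exists d', is_derive (fun s => log_ratio (U s) - log_ratio (s * c)) t d' /\ d' <= 0.
Proof.
  intros Htc HU Hd Hdc.
  exists (2 * (d * (1 - t * c * (t * c)) - c * (1 - U t * U t))
          / ((1 - U t * U t) * (1 - t * c * (t * c)))). split.
  - unfold log_ratio. auto_derive; [repeat split; try (exists d; exact Hd); nra |].
    replace (Derive (fun x => U x) t) with d by (symmetry; apply is_derive_unique, Hd).
    field. split; nra.
  - apply Rmult_le_0_r; [lra |]. left. apply Rinv_0_lt_compat, Rmult_lt_0_compat; nra.
Qed.

(* The hypothesis says that U moves no faster in the hyperbolic metric than [t c] does. *)
Lemma hyperbolic_speed_comparison c U : 0 < c < 1 ->
  (forall t, 0 < t <= 1 -> 0 < U t < 1 /\
     exists d, is_derive U t d /\ d * (1 - t * c * (t * c)) <= c * (1 - U t * U t)) ->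
  (forall eta, 0 < eta -> exists e, 0 < e < 1 /\ U e < eta) ->
  U 1 <= c.
Proof.
  intros Hc HU Hsmall.
  assert (Htc : forall t, 0 < t <= 1 -> 0 < t * c < 1)
    by (intros t Ht; split; [apply Rmult_lt_0_compat | apply Rle_lt_trans with (1 * c)]; nra).
  set (D := fun s => log_ratio (U s) - log_ratio (s * c)).
  assert (HD : forall t, 0 < t <= 1 -> is_derive D t (Derive D t) /\ Derive D t <= 0).
  { intros t Ht. destruct (HU t Ht) as [HUt [d [Hd Hdc]]].
    destruct (is_derive_log_ratio_gap c U t d (Htc t Ht) HUt Hd Hdc) as [d' [Hd' Hle]].
    rewrite (is_derive_unique D t d' Hd'). split; assumption. }
  assert (Hmono : forall e, 0 < e < 1 -> D 1 <= D e).
  { intros e He. destruct (MVT_gen D e 1 (Derive D)) as [x [Hx Hmvt]];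
      rewrite ?Rmin_left, ?Rmax_right in * by lra.
    - intros x Hx. apply HD. lra.
    - intros x Hx. apply continuity_pt_filterlim.
      apply (ex_derive_continuous (K := R_AbsRing) (V := R_NormedModule)).
      exists (Derive D x). apply HD. lra.
    - assert (Derive D x <= 0) by (apply HD; lra).
      assert (Derive D x * (1 - e) <= 0) by (apply Rmult_le_0_r; lra). lra. }
  assert (HD1 : D 1 <= 0).
  { destruct (Rle_dec (D 1) 0) as [H | H]; [exact H | exfalso].
    destruct (Hsmall (Rmin (1 / 2) (D 1 / 4))) as [e [He HUe]]; [apply Rmin_pos; lra |].
    pose proof (Rmin_l (1 / 2) (D 1 / 4)). pose proof (Rmin_r (1 / 2) (D 1 / 4)).
    pose proof (Hmono e He). destruct (HU e ltac:(lra)) as [HUe' _].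
    pose proof (log_ratio_le (U e) ltac:(lra)).
    pose proof (log_ratio_nonneg (e * c) ltac:(specialize (Htc e ltac:(lra)); lra)).
    unfold D in *. lra. }
  destruct (HU 1 ltac:(lra)) as [HU1 _].
  destruct (Rle_dec (U 1) c) as [Hle | Hgt]; [exact Hle | exfalso].
  pose proof (log_ratio_lt c (U 1) ltac:(lra) ltac:(lra) ltac:(lra)).
  unfold D in HD1. rewrite Rmult_1_l in HD1. lra.
Qed.

Lemma is_derive_Cmod_path g t l : is_pderive g t l -> g t <> 0%C ->
  exists d, is_derive (fun s => Cmod (g s)) t d /\ d <= Cmod l.
Proof.
  intros H Hn. destruct (is_pderive_Re_Im g t l H) as [H1 H2].
  assert (Hm : 0 < Cmod (g t)) by (apply Cmod_gt_0, Hn).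
  pose proof (Cmod_sqr (g t)) as Eg. pose proof (Cmod_sqr l) as El. pose proof (Cmod_ge_0 l).
  set (x := Re (g t)) in *. set (y := Im (g t)) in *.
  exists ((x * Re l + y * Im l) / Cmod (g t)). split.
  - unfold x, y, Re, Im in *. unfold Cmod.
    assert (Hp : 0 < fst (g t) ^ 2 + snd (g t) ^ 2) by nra.
    replace ((fst (g t) * fst l + snd (g t) * snd l) / sqrt (fst (g t) ^ 2 + snd (g t) ^ 2))
      with ((2 * fst (g t) * fst l + 2 * snd (g t) * snd l) / (2 * sqrt (fst (g t) ^ 2 + snd (g t) ^ 2)))
      by (field; apply Rgt_not_eq, sqrt_lt_R0, Hp).
    apply (is_derive_sqrt (fun s => fst (g s) ^ 2 + snd (g s) ^ 2)); [| exact Hp].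
    apply (is_derive_ext (fun s => fst (g s) * fst (g s) + snd (g s) * snd (g s)));
      [intros s; simpl; ring |].
    replace (2 * fst (g t) * fst l + 2 * snd (g t) * snd l)
      with ((fst l * fst (g t) + fst (g t) * fst l) + (snd l * snd (g t) + snd (g t) * snd l)) by ring.
    apply (@is_derive_plus R_AbsRing R_NormedModule); apply Derive.is_derive_mult; auto.
  -     apply Rmult_le_reg_r with (Cmod (g t)); [exact Hm |].
    unfold Rdiv. rewrite Rmult_assoc, Rinv_l, Rmult_1_r by lra.
    assert (0 <= (x * Im l - y * Re l) ^ 2) by apply pow2_ge_0.
    assert ((x * Re l + y * Im l) ^ 2 <= (Cmod l * Cmod (g t)) ^ 2) by nra.
    assert (0 <= Cmod l * Cmod (g t)) by nra. nra.
Qed.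

Lemma is_pderive_ray (z : C) t : is_pderive (fun s => RtoC s * z)%C t z.
Proof.
  apply is_pderive_of_Re_Im; unfold RtoC, Cmult, Re, Im; simpl;
    auto_derive; auto; ring.
Qed.

Section RadialSchwarz.

Variables (psi : C -> C) (z : C).
Hypotheses (psi_D : forall w, inD w -> inD (psi w)) (psi_holo : holo_on_D psi)
  (psi_0 : psi 0%C = 0%C) (psi_zero : forall w, inD w -> psi w = 0%C -> w = 0%C)
  (z_D : inD z) (z_neq0 : z <> 0%C).

Lemma is_Cderive_C_derive w : inD w -> is_Cderive psi w (C_derive psi w).
Proof. intros Hw. apply is_Cderive_is_derive, C_derive_correct; [exact w | apply psi_holo, Hw]. Qed.

Lemma radial_point t : 0 <= t <= 1 -> inD (RtoC t * z)%C /\ Cmod (RtoC t * z)%C = t * Cmod z.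
Proof.
  intros Ht. pose proof z_D as Hz. pose proof (Cmod_ge_0 z). unfold inD in *.
  rewrite Cmod_mult, Cmod_R, Rabs_right by lra. split; nra.
Qed.

(* from the Schwarz-Pick bound on |psi'| *)
Lemma radial_hyperbolic_speed t : 0 < t <= 1 ->
  0 < Cmod (psi (RtoC t * z)%C) < 1 /\
  exists d, is_derive (fun s => Cmod (psi (RtoC s * z)%C)) t d /\
    d * (1 - t * Cmod z * (t * Cmod z))
    <= Cmod z * (1 - Cmod (psi (RtoC t * z)%C) * Cmod (psi (RtoC t * z)%C)).
Proof.
  intros Ht. destruct (radial_point t ltac:(lra)) as [Hin Hmod].
  set (c := Cmod z) in *. set (w := (RtoC t * z)%C) in *. set (d := C_derive psi w).
  assert (Hc : 0 < c) by (apply Cmod_gt_0, z_neq0).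
  assert (Hnz : psi w <> 0%C).
  { intros E. apply z_neq0. apply psi_zero in E; [| exact Hin].
    apply (Cmult_integral (RtoC t) z) in E. destruct E as [E | E]; [| exact E].
    apply (f_equal Re) in E. simpl in E. lra. }
  split; [split; [apply Cmod_gt_0, Hnz | apply psi_D, Hin] |].
  destruct (is_derive_Cmod_path (fun s => psi (RtoC s * z)%C) t (z * d)%C) as [du [Hdu Hdule]];
    [apply is_pderive_comp; [apply is_Cderive_C_derive, Hin | apply is_pderive_ray] | exact Hnz |].
  exists du. split; [exact Hdu |].
  pose proof (schwarz_pick_deriv psi w d psi_D psi_holo Hin (is_Cderive_C_derive w Hin)) as HSP.
  rewrite Hmod in HSP. rewrite Cmod_mult in Hdule. fold c in Hdule.
  assert (Htc : t * c < 1) by (rewrite <- Hmod; exact Hin).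
  assert (0 < t * c) by (apply Rmult_lt_0_compat; lra).
  assert (0 < 1 - t * c * (t * c)) by nra.
  pose proof (Cmod_ge_0 d).
  apply Rle_trans with (c * Cmod d * (1 - t * c * (t * c))); [apply Rmult_le_compat_r; lra | nra].
Qed.

Lemma radial_modulus_small eta : 0 < eta -> exists e, 0 < e < 1 /\ Cmod (psi (RtoC e * z)%C) < eta.
Proof.
  intros Heta.
  destruct (is_pderive_continuous _ 0 _
              (is_pderive_comp psi (fun s => RtoC s * z)%C 0 _ _
                 (is_Cderive_C_derive _ (proj1 (radial_point 0 ltac:(lra)))) (is_pderive_ray z 0))
              (Rmin (1 / 2) eta)) as [del [Hdel Hsmall]]; [apply Rmin_pos; lra |].
  set (e := Rmin (del / 2) (1 / 2)).
  assert (He : 0 < e < 1) by (split; [apply Rmin_pos | eapply Rle_lt_trans; [apply Rmin_r |]]; lra).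
  exists e. split; [exact He |].
  specialize (Hsmall e). rewrite Cmult_0_l, psi_0, Rminus_0_r, Rabs_right in Hsmall by lra.
  replace (psi (RtoC e * z) - 0)%C with (psi (RtoC e * z)%C) in Hsmall by ring.
  eapply Rlt_le_trans; [apply Hsmall | apply Rmin_r].
  eapply Rle_lt_trans; [apply Rmin_l | lra].
Qed.

End RadialSchwarz.

Theorem schwarz_lemma psi z : (forall w, inD w -> inD (psi w)) -> holo_on_D psi ->
  psi 0%C = 0%C -> (forall w, inD w -> psi w = 0%C -> w = 0%C) -> inD z -> Cmod (psi z) <= Cmod z.
Proof.
  intros HD Hholo H0 Hzero Hz.
  destruct (Ceq_dec z 0) as [-> | Hz0]; [rewrite H0; lra |].
  replace (psi z) with (psi (RtoC 1 * z)%C) by (f_equal; ring).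
  apply (hyperbolic_speed_comparison (Cmod z) (fun t => Cmod (psi (RtoC t * z)%C))).
  - split; [apply Cmod_gt_0, Hz0 | exact Hz].
  - apply radial_hyperbolic_speed; assumption.
  - apply radial_modulus_small; assumption.
Qed.

(** * Pseudo-hyperbolic distance *)

Definition pseudo_dist (z w : C) : R := Cmod (mobius w z).

Lemma AutD_inD f z : AutD f -> inD z -> inD (f z).
Proof. intros [H _]. apply H. Qed.

Theorem pseudo_dist_AutD_le phi z w : AutD phi -> inD z -> inD w ->
  pseudo_dist (phi z) (phi w) <= pseudo_dist z w.
Proof.
  intros Hphi Hz Hw.
  set (psi := fun u => mobius (phi w) (phi (mobius w u))).
  assert (Hpsi : AutD psi)
    by (apply (AutD_comp (mobius (phi w)) (fun u => phi (mobius w u)));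
        [apply AutD_mobius, AutD_inD | apply AutD_comp; [| apply AutD_mobius]]; assumption).
  assert (H0 : psi 0%C = 0%C) by (unfold psi; rewrite mobius_0; apply mobius_self).
  assert (HMz : inD (mobius w z)) by (apply mobius_inD; assumption).
  destruct Hpsi as [HD [Hholo [psi' [_ [_ [Hpsi'psi _]]]]]].
  replace (pseudo_dist (phi z) (phi w)) with (Cmod (psi (mobius w z)))
    by (unfold psi, pseudo_dist; rewrite mobius_involutive by assumption; reflexivity).
  apply schwarz_lemma; auto.
  intros u Hu Hpsiu.
  rewrite <- (Hpsi'psi u Hu), <- (Hpsi'psi 0%C), Hpsiu, H0 by (unfold inD; rewrite Cmod_0; lra).
  reflexivity.
Qed.

Lemma pseudo_dist_comm z w : inD z -> inD w -> pseudo_dist z w = pseudo_dist w z.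
Proof.
  intros Hz Hw. unfold pseudo_dist, mobius.
  rewrite !Cmod_mult, !Cmod_inv by (apply mobius_denom_neq0; assumption).
  replace (z - w)%C with (- (w - z))%C by ring. rewrite Cmod_opp.
  replace (1 - Cconj z * w)%C with (Cconj (1 - Cconj w * z))
    by (destruct z, w; unfold Cconj, Cminus, Cplus, Copp, Cmult; simpl; f_equal; ring).
  rewrite Cmod_conj. reflexivity.
Qed.

Lemma mobius_real (a x : R) : 1 - a * x <> 0 -> mobius (RtoC a) (RtoC x) = RtoC ((a - x) / (1 - a * x)).
Proof.
  intros H. unfold mobius.
  replace (Cconj (RtoC a)) with (RtoC a) by (unfold Cconj, RtoC; simpl; f_equal; ring).
  rewrite <- RtoC_mult, <- !RtoC_minus, <- RtoC_inv by exact H. rewrite <- RtoC_mult. reflexivity.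
Qed.

Definition pm_dist (b : R) : R := 2 * b / (1 + b * b).

Lemma pseudo_dist_pm b : 0 <= b < 1 -> pseudo_dist (RtoC b) (RtoC (- b)) = pm_dist b.
Proof.
  intros Hb. unfold pseudo_dist, pm_dist. rewrite mobius_real by nra. rewrite Cmod_R.
  replace ((- b - b) / (1 - - b * b)) with (- (2 * b / (1 + b * b))) by (field; nra).
  rewrite Rabs_Ropp, Rabs_right; [reflexivity |]. apply Rle_ge, Rdiv_le_0_compat; nra.
Qed.

Lemma pm_dist_in01 b : in01 b -> in01 (pm_dist b).
Proof.
  intros [H0 H1]. unfold pm_dist. split; [apply Rdiv_lt_0_compat; nra |].
  apply Rmult_lt_reg_r with (1 + b * b); [nra |].
  unfold Rdiv. rewrite Rmult_assoc, Rinv_l by nra. nra.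
Qed.

Lemma pm_dist_injective b b' : in01 b -> in01 b' -> pm_dist b = pm_dist b' -> b = b'.
Proof.
  intros [H0 H1] [H0' H1'] H. unfold pm_dist in H.
  assert (E : (b - b') * (1 - b * b') = 0).
  { apply (f_equal (fun t => t * (1 + b * b) * (1 + b' * b') / 2)) in H.
    field_simplify in H; nra. }
  apply Rmult_integral in E. destruct E; nra.
Qed.

(** * Orbits in the symmetrized bidisc *)

Lemma sym_pair_eq (u1 u2 w1 w2 : C) : (u1 + u2, u1 * u2)%C = (w1 + w2, w1 * w2)%C ->
  (u1 = w1 /\ u2 = w2) \/ (u1 = w2 /\ u2 = w1).
Proof.
  intros H.
  assert (Hs := f_equal fst H). assert (Hp := f_equal snd H). cbn [fst snd] in Hs, Hp.
  assert (Hu2 : u2 = (w1 + w2 - u1)%C) by (rewrite <- Hs; ring).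
  assert (E : ((u1 - w1) * (u1 - w2))%C = 0%C).
  { replace ((u1 - w1) * (u1 - w2))%C with (u1 * u1 - u1 * (w1 + w2) + w1 * w2)%C by ring.
    rewrite <- Hp, <- Hs. ring. }
  apply Cmult_integral in E. destruct E as [E | E].
  - left. assert (u1 = w1) by (replace u1 with (u1 - w1 + w1)%C by ring; rewrite E; ring).
    subst u1. split; [reflexivity | rewrite Hu2; ring].
  - right. assert (u1 = w2) by (replace u1 with (u1 - w2 + w2)%C by ring; rewrite E; ring).
    subst u1. split; [reflexivity | rewrite Hu2; ring].
Qed.

Lemma sym_pair_map (f : C -> C) (u1 u2 w1 w2 : C) : (u1 + u2, u1 * u2)%C = (w1 + w2, w1 * w2)%C ->
  (f u1 + f u2, f u1 * f u2)%C = (f w1 + f w2, f w1 * f w2)%C.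
Proof.
  intros H. destruct (sym_pair_eq _ _ _ _ H) as [[-> ->] | [-> ->]]; [reflexivity | f_equal; ring].
Qed.

Lemma same_orbit_of_H_rel m x x' : AutD m -> H_rel m x x' -> same_orbit x x'.
Proof.
  intros Hm [z1 [z2 [Hz1 [Hz2 [Hx Hx']]]]] y.
  destruct (AutD_inverse m Hm) as [m' [Hm' [Hm'm _]]].
  split.
  - intros [phi [Hphi [u1 [u2 [Hu1 [Hu2 [Hxu Hy]]]]]]].
    exists (fun w => phi (m' w)). split; [apply AutD_comp; assumption |].
    exists (m z1), (m z2). repeat split; try (apply AutD_inD; assumption); [exact Hx' |].
    rewrite !Hm'm by assumption. rewrite Hy. apply sym_pair_map. rewrite <- Hxu, <- Hx. reflexivity.
  - intros [phi [Hphi [w1 [w2 [Hw1 [Hw2 [Hxw Hy]]]]]]].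
    exists (fun w => phi (m w)). split; [apply AutD_comp; assumption |].
    exists z1, z2. repeat split; try assumption.
    rewrite Hy. apply (sym_pair_map phi). rewrite <- Hxw, <- Hx'. reflexivity.
Qed.

Lemma orbit_refl x : inG x -> orbit x x.
Proof.
  intros [z1 [z2 [Hz1 [Hz2 Hx]]]]. exists (fun z => z). split; [exact AutD_id |].
  exists z1, z2. repeat split; assumption.
Qed.

Definition G_0 (a : R) : C * C := (RtoC a, RtoC 0).
Definition G_pm (b : R) : C * C := (RtoC 0, (- (RtoC b * RtoC b))%C).

Lemma G_pm_sym_pair b : G_pm b = (RtoC b + RtoC (- b), RtoC b * RtoC (- b))%C.
Proof. unfold G_pm. rewrite RtoC_opp. f_equal; ring. Qed.

Lemma inD_RtoC (x : R) : -1 < x < 1 -> inD (RtoC x).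
Proof. intros Hx. unfold inD. rewrite Cmod_R. apply Rabs_def1; lra. Qed.

Lemma pseudo_dist_G_pm b u1 u2 : 0 <= b < 1 -> inD u1 -> inD u2 ->
  G_pm b = (u1 + u2, u1 * u2)%C -> pseudo_dist u1 u2 = pm_dist b.
Proof.
  intros Hb Hu1 Hu2 H. rewrite G_pm_sym_pair in H.
  destruct (sym_pair_eq _ _ _ _ (eq_sym H)) as [[-> ->] | [-> ->]];
    [| rewrite pseudo_dist_comm by assumption]; apply pseudo_dist_pm, Hb.
Qed.

Lemma orbit_G_pm_le b b' : in01 b -> in01 b' -> orbit (G_pm b') (G_pm b) -> pm_dist b <= pm_dist b'.
Proof.
  intros Hb Hb' [phi [Hphi [z1 [z2 [Hz1 [Hz2 [Hx Hy]]]]]]].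
  rewrite <- (pseudo_dist_G_pm b' z1 z2), <- (pseudo_dist_G_pm b (phi z1) (phi z2));
    try (apply AutD_inD; assumption); try assumption; try (destruct Hb; destruct Hb'; lra).
  apply pseudo_dist_AutD_le; assumption.
Qed.

Lemma same_orbit_G_0_G_pm b : in01 b -> same_orbit (G_0 (pm_dist b)) (G_pm b).
Proof.
  intros Hb y. symmetry. revert y.
  assert (HbD : inD (RtoC b)) by (apply inD_RtoC; destruct Hb; lra).
  apply (same_orbit_of_H_rel (mobius b)); [apply AutD_mobius, HbD |].
  exists (RtoC b), (RtoC (- b)). repeat split; [exact HbD | apply inD_RtoC; destruct Hb; lra | |].
  - apply G_pm_sym_pair.
  - rewrite mobius_self, mobius_real by (destruct Hb; nra).
    unfold G_0, pm_dist. f_equal; [| ring]. rewrite Cplus_0_l. f_equal. field. destruct Hb; nra.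
Qed.

Lemma same_orbit_G_pm_inj b b' : in01 b -> in01 b' -> same_orbit (G_pm b) (G_pm b') -> b = b'.
Proof.
  intros Hb Hb' H.
  assert (Hin : forall c, in01 c -> inG (G_pm c))
    by (intros c Hc; exists (RtoC c), (RtoC (- c));
        repeat split; try apply inD_RtoC; try (destruct Hc; lra); apply G_pm_sym_pair).
  apply pm_dist_injective; try assumption.
  apply Rle_antisym; apply orbit_G_pm_le; try assumption.
  - apply H, orbit_refl, Hin, Hb.
  - apply H, orbit_refl, Hin, Hb'.
Qed.

(** * Smoothness *)

Inductive expr := Const (r : R) | Atom (i : nat) | Add (e1 e2 : expr) | Mul (e1 e2 : expr).

Fixpoint expr_eval (atom : nat -> R -> R) (e : expr) (x : R) : R :=
  match e with
  | Const r => r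
  | Atom i => atom i x
  | Add e1 e2 => expr_eval atom e1 x + expr_eval atom e2 x
  | Mul e1 e2 => expr_eval atom e1 x * expr_eval atom e2 x
  end.

Fixpoint expr_deriv (datom : nat -> expr) (e : expr) : expr :=
  match e with
  | Const _ => Const 0
  | Atom i => datom i
  | Add e1 e2 => Add (expr_deriv datom e1) (expr_deriv datom e2)
  | Mul e1 e2 => Add (Mul (expr_deriv datom e1) e2) (Mul e1 (expr_deriv datom e2))
  end.

Section AtomicFamily.

(* A finite family of functions on an open set U whose derivatives are polynomials in the family:
   every polynomial in the family is then smooth on U. *)
Variables (atom : nat -> R -> R) (datom : nat -> expr) (U : R -> Prop).
Hypothesis U_open : forall x, U x -> locally x U.
Hypothesis atom_deriv : forall i x, U x -> is_derive (atom i) x (expr_eval atom (datom i) x).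

Lemma is_derive_expr_eval e x : U x ->
  is_derive (expr_eval atom e) x (expr_eval atom (expr_deriv datom e) x).
Proof.
  intros Hx. induction e as [r | i | e1 IH1 e2 IH2 | e1 IH1 e2 IH2]; simpl.
  - apply (is_derive_const (K := R_AbsRing) (V := R_NormedModule)).
  - apply atom_deriv, Hx.
  - apply (is_derive_plus (K := R_AbsRing) (V := R_NormedModule)); assumption.
  - apply Derive.is_derive_mult; assumption.
Qed.

Lemma Derive_n_expr_eval n e x : U x ->
  Derive_n (expr_eval atom e) n x = expr_eval atom (Nat.iter n (expr_deriv datom) e) x.
Proof.
  revert e x. induction n as [| n IH]; intros e x Hx; [reflexivity |].
  simpl Derive_n. rewrite (Derive_ext_loc _ (expr_eval atom (Nat.iter n (expr_deriv datom) e))).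
  - apply is_derive_unique, is_derive_expr_eval, Hx.
  - destruct (U_open x Hx) as [eps Heps]. exists eps. intros y Hy. apply IH, Heps, Hy.
Qed.

Lemma ex_derive_n_expr_eval n e x : U x -> ex_derive_n (expr_eval atom e) n x.
Proof.
  intros Hx. destruct n as [| n]; [exact I |]. simpl.
  exists (expr_eval atom (expr_deriv datom (Nat.iter n (expr_deriv datom) e)) x).
  apply (is_derive_ext_loc (expr_eval atom (Nat.iter n (expr_deriv datom) e))).
  - destruct (U_open x Hx) as [eps Heps]. exists eps. intros y Hy.
    symmetry. apply Derive_n_expr_eval, Heps, Hy.
  - apply is_derive_expr_eval, Hx.
Qed.

End AtomicFamily.

Lemma in01_locally x : in01 x -> locally x in01.
Proof.
  intros [H1 H2]. assert (He : 0 < Rmin x (1 - x)) by (apply Rmin_pos; lra).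
  exists (mkposreal _ He). intros y Hy. simpl in Hy.
  unfold ball in Hy; simpl in Hy. unfold AbsRing_ball, abs, minus, plus, opp in Hy; simpl in Hy.
  pose proof (Rmin_l x (1 - x)). pose proof (Rmin_r x (1 - x)).
  apply Rabs_lt_between in Hy. unfold in01. lra.
Qed.

Definition pm_dist_atom (i : nat) (x : R) : R := match i with O => x | _ => / (1 + x * x) end.
Definition pm_dist_datom (i : nat) : expr :=
  match i with O => Const 1 | _ => Mul (Const (-2)) (Mul (Atom 0) (Mul (Atom 1) (Atom 1))) end.

Lemma smooth_pm_dist : smooth_on01 pm_dist.
Proof.
  intros n x Hx.
  change pm_dist with (expr_eval pm_dist_atom (Mul (Mul (Const 2) (Atom 0)) (Atom 1))).
  apply (ex_derive_n_expr_eval _ pm_dist_datom in01 in01_locally); [| exact Hx].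
  intros i y _. assert (0 < 1 + y * y) by nra.
  destruct i as [| i]; unfold pm_dist_atom; simpl; auto_derive; try lra; field; lra.
Qed.

Definition pm_dist_inv (a : R) : R := a / (1 + sqrt (1 - a * a)).

Definition pm_dist_inv_atom (i : nat) (x : R) : R :=
  match i with
  | O => x
  | 1%nat => sqrt (1 - x * x)
  | 2%nat => / sqrt (1 - x * x)
  | _ => / (1 + sqrt (1 - x * x))
  end.
Definition pm_dist_inv_datom (i : nat) : expr :=
  match i with
  | O => Const 1
  | 1%nat => Mul (Const (-1)) (Mul (Atom 0) (Atom 2))
  | 2%nat => Mul (Atom 0) (Mul (Atom 2) (Mul (Atom 2) (Atom 2)))
  | _ => Mul (Atom 0) (Mul (Atom 2) (Mul (Atom 3) (Atom 3)))
  end.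

Lemma smooth_pm_dist_inv : smooth_on01 pm_dist_inv.
Proof.
  intros n x Hx.
  change pm_dist_inv with (expr_eval pm_dist_inv_atom (Mul (Atom 0) (Atom 3))).
  apply (ex_derive_n_expr_eval _ pm_dist_inv_datom in01 in01_locally); [| exact Hx].
  intros i y [H1 H2]. assert (Hp : 0 < 1 - y * y) by nra.
  assert (Hs : 0 < sqrt (1 - y * y)) by (apply sqrt_lt_R0, Hp).
  assert (Hss : sqrt (1 - y * y) * sqrt (1 - y * y) = 1 - y * y) by (apply sqrt_sqrt; lra).
  destruct i as [| [| [| i]]]; unfold pm_dist_inv_atom; simpl; auto_derive;
    replace (1 + - (y * y)) with (1 - y * y) by ring; repeat split; try lra; field; repeat split; lra.
Qed.

Lemma sqrt_1_minus_sq x : in01 x ->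
  0 < sqrt (1 - x * x) < 1 /\ sqrt (1 - x * x) * sqrt (1 - x * x) = 1 - x * x.
Proof.
  intros [H1 H2].
  assert (Hss : sqrt (1 - x * x) * sqrt (1 - x * x) = 1 - x * x) by (apply sqrt_sqrt; nra).
  assert (0 < sqrt (1 - x * x)) by (apply sqrt_lt_R0; nra).
  repeat split; nra.
Qed.

Lemma pm_dist_inv_in01 a : in01 a -> in01 (pm_dist_inv a).
Proof.
  intros Ha. destruct (sqrt_1_minus_sq a Ha) as [[S1 S2] S3]. destruct Ha as [H1 H2].
  unfold pm_dist_inv. split; [apply Rdiv_lt_0_compat; lra |].
  apply Rmult_lt_reg_r with (1 + sqrt (1 - a * a)); [lra |].
  unfold Rdiv. rewrite Rmult_assoc, Rinv_l by lra. lra.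
Qed.

Lemma pm_dist_pm_dist_inv a : in01 a -> pm_dist (pm_dist_inv a) = a.
Proof.
  intros Ha. destruct (sqrt_1_minus_sq a Ha) as [[S1 S2] S3]. destruct Ha as [H1 H2].
  unfold pm_dist, pm_dist_inv. set (s := sqrt (1 - a * a)) in *.
  replace (1 + a / (1 + s) * (a / (1 + s))) with (2 / (1 + s)).
  - field. lra.
  - replace (1 + a / (1 + s) * (a / (1 + s))) with (((1 + s) * (1 + s) + a * a) / ((1 + s) * (1 + s)))
      by (field; lra).
    replace (a * a) with (1 - s * s) by lra. field. lra.
Qed.

Lemma pm_dist_inv_pm_dist b : in01 b -> pm_dist_inv (pm_dist b) = b.
Proof.
  intros [H1 H2]. unfold pm_dist, pm_dist_inv.
  replace (1 - 2 * b / (1 + b * b) * (2 * b / (1 + b * b)))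
    with (((1 - b * b) / (1 + b * b)) * ((1 - b * b) / (1 + b * b))) by (field; nra).
  rewrite sqrt_square by (apply Rdiv_le_0_compat; nra). field. split; nra.
Qed.

Theorem lemma2p9 :
  (forall a : R, in01 a ->
     exists! b : R, in01 b /\
       same_orbit (RtoC a, RtoC 0) (RtoC 0, (- (RtoC b * RtoC b))%C)) /\
  (exists f : R -> R,
     (forall a : R, in01 a -> in01 (f a) /\
        same_orbit (RtoC a, RtoC 0) (RtoC 0, (- (RtoC (f a) * RtoC (f a)))%C)) /\
     diffeo01 f).
Proof.
  assert (Horb : forall a, in01 a -> in01 (pm_dist_inv a) /\ same_orbit (G_0 a) (G_pm (pm_dist_inv a))).
  { intros a Ha. pose proof (pm_dist_inv_in01 a Ha) as Hb. split; [exact Hb |].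
    rewrite <- (pm_dist_pm_dist_inv a Ha) at 1. apply same_orbit_G_0_G_pm, Hb. }
  split.
  - intros a Ha. exists (pm_dist_inv a). split; [exact (Horb a Ha) |].
    intros b [Hb Hab]. apply same_orbit_G_pm_inj; [apply Horb, Ha | exact Hb |].
    intros y. rewrite <- (proj2 (Horb a Ha) y). apply Hab.
  - exists pm_dist_inv. split; [exact Horb |].
    split; [intros a Ha; apply pm_dist_inv_in01, Ha |]. split; [exact smooth_pm_dist_inv |].
    exists pm_dist. split; [exact pm_dist_in01 |]. split; [exact smooth_pm_dist |].
    split; [exact pm_dist_pm_dist_inv | exact pm_dist_inv_pm_dist].
Qed.
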